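(* Let $0<\alpha\le2$, $j\ne0$, $V\in C^2(\mathbb{T})$, and let $G\in C^2(\mathbb{T})$ satisfy (M). Let $(G_n)_{n\in\mathbb{N}}\subset C^2(\mathbb{T})$ with $\|G_n-G\|_{C^2(\mathbb{T})}\to0$, and suppose that for each $n$ problem (P) with kernel $G_n$ has a solution $(m_n,\overline{H}_n)$. Then there exists $(m,\overline{H})\in C^2(\mathbb{T})\times\mathbb{R}$ such that $\|m_n-m\|_{C^2(\mathbb{T})}\to0$ and $\overline{H}_n\to\overline{H}$ along the whole sequence, and $(m,\overline{H})$ solves problem (P) with kernel $G$.
   Context: $\mathbb{T}=\mathbb{R}/\mathbb{Z}$. Problem (P) with kernel $K\in C^2(\mathbb{T})$: find $(m,\overline{H})\in C(\mathbb{T})\times\mathbb{R}$ with $m>0$ on $\mathbb{T}$, $\int_{\mathbb{T}}m=1$, and $\frac{j^2}{2m(x)^\alpha}+V(x)=\int_{\mathbb{T}}K(x-y)m(y)\,dy+\overline{H}$ for all $x\in\mathbb{T}$. Condition (M): $\int_{\mathbb{T}^2}G(x-y)f(x)f(y)\,dx\,dy\ge0$ for all $f\in C(\mathbb{T})$. *)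

From Stdlib Require Import Reals.
Open Scope R_scope.

(* Functions on T = R/Z are represented as 1-periodic functions R -> R. *)
Definition periodic1 (f : R -> R) : Prop := forall x, f (x + 1) = f x.

Definition CT (f : R -> R) : Prop := periodic1 f /\ continuity f.

Definition C2T_with (f f1 f2 : R -> R) : Prop :=
  periodic1 f /\
  (forall x, derivable_pt_lim f x (f1 x)) /\
  (forall x, derivable_pt_lim f1 x (f2 x)) /\
  continuity f2.

Definition C2T (f : R -> R) : Prop := exists f1 f2, C2T_with f f1 f2.

Definition is_integral (f : R -> R) (a b v : R) : Prop :=
  exists pr : Riemann_integrable f a b, RiemannInt pr = v.

Definition unif_cv (fn : nat -> R -> R) (f : R -> R) : Prop :=
  forall eps, 0 < eps -> exists N, forall n x, (n >= N)%nat -> Rabs (fn n x - f x) <= eps.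

(* || f_n - f ||_{C^2(T)} -> 0, where ||g||_{C^2} = sup|g| + sup|g'| + sup|g''|. *)
Definition C2_cv (fn : nat -> R -> R) (f : R -> R) : Prop :=
  exists (fn1 fn2 : nat -> R -> R) (f1 f2 : R -> R),
    (forall n, C2T_with (fn n) (fn1 n) (fn2 n)) /\
    C2T_with f f1 f2 /\
    unif_cv fn f /\ unif_cv fn1 f1 /\ unif_cv fn2 f2.

(* Condition (M): int_{T^2} G(x-y) f(x) f(y) dx dy >= 0 for all f in C(T),
   the double integral written as the iterated integral
   int_0^1 f(x) (int_0^1 G(x-y) f(y) dy) dx. *)
Definition condM (G : R -> R) : Prop :=
  forall f : R -> R, CT f ->
  forall (g : R -> R) (I : R),
    (forall x, is_integral (fun y => G (x - y) * f y) 0 1 (g x)) ->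
    is_integral (fun x => f x * g x) 0 1 I ->
    0 <= I.

Definition solvesP (alpha j : R) (V K m : R -> R) (Hbar : R) : Prop :=
  CT m /\ (forall x, 0 < m x) /\ is_integral m 0 1 1 /\
  forall x, exists c : R,
    is_integral (fun y => K (x - y) * m y) 0 1 c /\
    j ^ 2 / (2 * Rpower (m x) alpha) + V x = c + Hbar.

From Stdlib Require Import Reals Lra Lia ZArith.
From Coquelicot Require Import Coquelicot.
Open Scope R_scope.

(** Write [A = j ^ 2 / 2] and [b = / alpha]: a solution of (P) is a fixed point [m = (A / F) ^ b] of
    its potential [F = K * m + H - V].  Uniformly in [n], the potentials [F_n] lie in a fixed band
    [[dl, M]]: unit mass bounds them above, and a second-order Taylor bound at a minimum of [F_n]
    bounds them below.  On such a band [s |-> (A / s) ^ b] is Lipschitz and strongly decreasing, so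
    condition (M) controls the difference of two solutions whose kernels are close to [G]: pairing
    [m_n - m_k] with the difference of the potentials gives an [L^2] bound on [m_n - m_k], convolution
    with [G] turns it into a uniform bound, and since [m_n - m_k] has mean zero this bounds
    [H_n - H_k] and then [m_n - m_k] uniformly.  The sequence is therefore Cauchy, its limit solves
    (P) with kernel [G], and the explicit formulas for the first two derivatives of [(A / F) ^ b]
    give convergence in [C^2]. *)

Lemma periodic1_shift_nat f : periodic1 f -> forall n x, f (x + INR n) = f x.
Proof.
  intros Hp n; induction n as [|n IH]; intro x.
  - simpl; f_equal; ring.
  - rewrite S_INR. replace (x + (INR n + 1)) with ((x + INR n) + 1) by ring.
    rewrite Hp; apply IH.
Qed.

Lemma periodic1_shift_Z f : periodic1 f -> forall z x, f (x + IZR z) = f x.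
Proof.
  intros Hp z x. destruct (Z_le_gt_dec 0 z) as [Hz|Hz].
  - rewrite <- (Z2Nat.id z Hz), <- INR_IZR_INZ. apply periodic1_shift_nat; auto.
  - assert (Hz' : (0 <= - z)%Z) by lia.
    rewrite <- (periodic1_shift_nat f Hp (Z.to_nat (- z))), INR_IZR_INZ, Z2Nat.id by auto.
    f_equal. rewrite opp_IZR. ring.
Qed.

Lemma periodic1_reduce f : periodic1 f -> forall x, exists y, 0 <= y <= 1 /\ f x = f y.
Proof.
  intros Hp x. destruct (base_Int_part x) as [H1 H2].
  exists (x + IZR (- Int_part x)). split.
  - rewrite opp_IZR; lra.
  - rewrite periodic1_shift_Z; auto.
Qed.

Lemma periodic1_bounded f : periodic1 f -> continuity f ->
  exists B, 0 <= B /\ forall x, Rabs (f x) <= B.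
Proof.
  intros Hp Hc.
  destruct (continuity_ab_maj (fun x => Rabs (f x)) 0 1) as [M [HM _]]; [lra| |].
  - intros c _. apply (continuity_pt_comp f Rabs); [apply Hc | apply Rcontinuity_abs].
  - exists (Rabs (f M)). split; [apply Rabs_pos|].
    intro x. destruct (periodic1_reduce f Hp x) as [y [Hy ->]]. apply HM; auto.
Qed.

Lemma periodic1_min f : periodic1 f -> continuity f ->
  exists x0, 0 <= x0 <= 1 /\ forall x, f x0 <= f x.
Proof.
  intros Hp Hc.
  destruct (continuity_ab_min f 0 1) as [M [HM HM1]]; [lra| intros; apply Hc |].
  exists M. split; auto. intro x. destruct (periodic1_reduce f Hp x) as [y [Hy ->]]. apply HM; auto.
Qed.

Lemma periodic1_derivative f f1 : periodic1 f ->
  (forall x, derivable_pt_lim f x (f1 x)) -> periodic1 f1.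
Proof.
  intros Hp Hd x. apply (uniqueness_limite f x); [|apply Hd].
  intros eps He. destruct (Hd (x + 1) eps He) as [d Hd']. exists d. intros h Hh Hhd.
  specialize (Hd' h Hh Hhd). replace (x + 1 + h) with ((x + h) + 1) in Hd' by ring.
  rewrite !Hp in Hd'. exact Hd'.
Qed.

Lemma derivable_continuity f f1 : (forall x, derivable_pt_lim f x (f1 x)) -> continuity f.
Proof. intros Hd x. apply derivable_continuous_pt. exists (f1 x). apply Hd. Qed.

Lemma continuity_cst c : continuity (fun _ => c).
Proof. apply continuity_const. intros ? ?; reflexivity. Qed.

Lemma continuity_sqr f : continuity f -> continuity (fun x => f x ^ 2).
Proof.
  intros Hf x. apply (continuity_pt_ext (fun x => f x * f x)); [intros; ring|].
  apply continuity_mult; auto.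
Qed.

Lemma C2T_with_continuity f f1 f2 : C2T_with f f1 f2 -> continuity f /\ continuity f1.
Proof.
  intros (_ & Hd & Hd1 & _). split; eapply derivable_continuity; eauto.
Qed.

Lemma C2T_with_periodic f f1 f2 : C2T_with f f1 f2 -> periodic1 f1 /\ periodic1 f2.
Proof.
  intros (Hp & Hd & Hd1 & _).
  assert (Hp1 := periodic1_derivative f f1 Hp Hd).
  split; [|apply (periodic1_derivative f1)]; auto.
Qed.

Lemma C2T_with_ext f g f1 f2 : C2T_with f f1 f2 -> (forall x, g x = f x) -> C2T_with g f1 f2.
Proof.
  intros (Hp & Hd & Hd1 & Hc) E. repeat split; auto.
  - intro x; rewrite !E; apply Hp.
  - intro x. apply (derivable_pt_lim_ext f); auto.
Qed.

Lemma min_derivative_0 f x0 l : (forall x, f x0 <= f x) -> derivable_pt_lim f x0 l -> l = 0.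
Proof.
  intros Hm Hd.
  pose (pr := exist (fun l => derivable_pt_lim f x0 l) l Hd : derivable_pt f x0).
  change (derive_pt f x0 pr = 0).
  apply (deriv_minimum f (x0 - 1) (x0 + 1)); try lra. intros; apply Hm.
Qed.

(** Coquelicot's integral rules restated over [R], so that they rewrite terms built with [Rplus] and [Rmult]. *)

Lemma ex_RInt_continuity (f : R -> R) a b : continuity f -> ex_RInt f a b.
Proof.
  intro Hc. apply (@ex_RInt_continuous R_CompleteNormedModule).
  intros z _. apply continuity_pt_filterlim, Hc.
Qed.

Lemma RInt_plus_R (f g : R -> R) a b : ex_RInt f a b -> ex_RInt g a b ->
  RInt (fun x => f x + g x) a b = RInt f a b + RInt g a b.
Proof. intros; apply (RInt_plus f g a b); auto. Qed.

Lemma RInt_minus_R (f g : R -> R) a b : ex_RInt f a b -> ex_RInt g a b ->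
  RInt (fun x => f x - g x) a b = RInt f a b - RInt g a b.
Proof. intros; apply (RInt_minus f g a b); auto. Qed.

Lemma RInt_scal_R (f : R -> R) c a b : ex_RInt f a b ->
  RInt (fun x => c * f x) a b = c * RInt f a b.
Proof. intros; apply (RInt_scal f a b c); auto. Qed.

Lemma RInt_const_R (c : R) a b : RInt (fun _ => c) a b = (b - a) * c.
Proof. rewrite RInt_const. reflexivity. Qed.

Lemma RInt_abs_le (f g : R -> R) a b : a <= b -> ex_RInt f a b -> ex_RInt g a b ->
  (forall t, a <= t <= b -> Rabs (f t) <= g t) -> Rabs (RInt f a b) <= RInt g a b.
Proof.
  intros Hab Hf Hg H. apply Rabs_le. split.
  - replace (- RInt g a b) with (RInt (fun t => (-1) * g t) a b)
      by (rewrite RInt_scal_R by auto; lra).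
    apply RInt_le; auto.
    + apply (ex_RInt_scal g a b (-1)); auto.
    + intros t Ht. specialize (H t ltac:(lra)). apply Rabs_le_between in H. lra.
  - apply RInt_le; auto. intros t Ht. specialize (H t ltac:(lra)).
    apply Rabs_le_between in H. lra.
Qed.

Lemma is_integral_of_RInt (f : R -> R) a b v : ex_RInt f a b -> RInt f a b = v -> is_integral f a b v.
Proof. intros He Hv. exists (ex_RInt_Reals_0 f a b He). rewrite <- RInt_Reals. exact Hv. Qed.

Lemma RInt_of_is_integral (f : R -> R) a b v : is_integral f a b v -> RInt f a b = v.
Proof. intros [pr Hpr]. rewrite (RInt_Reals f a b pr). exact Hpr. Qed.

Definition conv (K f : R -> R) (x : R) := RInt (fun y => K (x - y) * f y) 0 1.

Lemma continuity_conv_integrand K f x : continuity K -> continuity f ->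
  continuity (fun y => K (x - y) * f y).
Proof.
  intros HK Hf. apply continuity_mult; auto. intro y.
  apply (continuity_pt_comp (fun y => x - y) K); [|apply HK].
  apply continuity_pt_minus; [apply continuity_cst | apply continuity_pt_id].
Qed.

Lemma continuity_2d_conv_integrand K f u v : continuity K -> continuity f ->
  continuity_2d_pt (fun u v => K (u - v) * f v) u v.
Proof.
  intros HK Hf. apply continuity_2d_pt_mult.
  - apply (continuity_1d_2d_pt_comp K (fun u v => u - v)); [apply HK|].
    apply continuity_2d_pt_minus; [apply continuity_2d_pt_id1 | apply continuity_2d_pt_id2].
  - apply (continuity_1d_2d_pt_comp f (fun u v => v)); [apply Hf | apply continuity_2d_pt_id2].
Qed.

Lemma ex_RInt_conv K f x a b : continuity K -> continuity f ->
  ex_RInt (fun y => K (x - y) * f y) a b.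
Proof. intros; apply ex_RInt_continuity, continuity_conv_integrand; auto. Qed.

Lemma derivable_pt_lim_conv K K1 f x : (forall x, derivable_pt_lim K x (K1 x)) -> continuity K1 ->
  continuity f -> derivable_pt_lim (conv K f) x (conv K1 f x).
Proof.
  intros HK HK1 Hf. apply is_derive_Reals.
  assert (HD : forall u v, is_derive (fun z => K (z - v) * f v) u (K1 (u - v) * f v)).
  { intros u v. apply is_derive_Reals, derivable_pt_lim_scal_right.
    rewrite <- (Rmult_1_r (K1 (u - v))).
    apply (derivable_pt_lim_comp (fun z => z - v) K); [|apply HK].
    rewrite <- Rminus_0_r. apply derivable_pt_lim_minus.
    - apply derivable_pt_lim_id.
    - apply derivable_pt_lim_const. }
  unfold conv.
  rewrite <- (RInt_ext (fun t => Derive (fun u => K (u - t) * f t) x))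
    by (intros; apply is_derive_unique, HD).
  apply (is_derive_RInt_param (fun u t => K (u - t) * f t)).
  - apply filter_forall. intros y t _. eexists. apply HD.
  - intros t _. apply continuity_2d_pt_ext with (f := fun u v => K1 (u - v) * f v).
    + intros; symmetry; apply is_derive_unique, HD.
    + apply continuity_2d_conv_integrand; auto.
  - apply filter_forall. intros y. apply ex_RInt_conv; auto. eapply derivable_continuity; eauto.
Qed.

Lemma continuity_conv K f : continuity K -> continuity f -> continuity (conv K f).
Proof.
  intros HK Hf x eps He.
  destruct (uniform_continuity_2d (fun u v => K (u - v) * f v) (x - 1) (x + 1) 0 1
     (fun u v _ _ => continuity_2d_conv_integrand K f u v HK Hf) (mkposreal (eps/2) ltac:(lra)))
     as [d Hd].
  exists (Rmin d 1). split; [apply Rmin_pos; [apply cond_pos|lra]|].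
  intros x' [_ Hdist]. simpl in Hdist |- *. unfold R_dist, conv in *.
  assert (Hd1 : Rmin d 1 <= 1) by apply Rmin_r. assert (Hdd : Rmin d 1 <= d) by apply Rmin_l.
  rewrite <- RInt_minus_R by (apply ex_RInt_conv; auto).
  apply Rle_lt_trans with (RInt (fun _ => eps/2) 0 1).
  - apply RInt_abs_le; [lra| | |].
    + apply ex_RInt_continuity, continuity_minus; apply continuity_conv_integrand; auto.
    + apply ex_RInt_continuity, continuity_cst.
    + intros t Ht. left. apply (Hd x t x' t); try lra.
      * apply Rabs_def2 in Hdist. lra.
      * rewrite Rminus_diag, Rabs_R0. apply cond_pos.
  - rewrite RInt_const_R. lra.
Qed.

Lemma conv_abs_le_mass K f B x : continuity K -> continuity f -> (forall y, Rabs (K y) <= B) ->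
  (forall y, 0 <= f y) -> Rabs (conv K f x) <= B * RInt f 0 1.
Proof.
  intros HK Hf HB Hp. unfold conv. rewrite <- RInt_scal_R by (apply ex_RInt_continuity; auto).
  apply RInt_abs_le; [lra|apply ex_RInt_conv; auto| |].
  - apply ex_RInt_continuity, continuity_mult; auto. apply continuity_cst.
  - intros t _. rewrite Rabs_mult, (Rabs_right (f t)) by (apply Rle_ge, Hp).
    apply Rmult_le_compat_r; auto.
Qed.

Lemma conv_abs_le_sup K f B C x : continuity K -> continuity f -> (forall y, Rabs (K y) <= B) ->
  (forall y, Rabs (f y) <= C) -> Rabs (conv K f x) <= B * C.
Proof.
  intros HK Hf HB HC. unfold conv.
  apply Rle_trans with (RInt (fun _ => B * C) 0 1).
  - apply RInt_abs_le; [lra|apply ex_RInt_conv; auto|apply ex_RInt_continuity, continuity_cst|].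
    intros t _. rewrite Rabs_mult. apply Rmult_le_compat; auto; apply Rabs_pos.
  - rewrite RInt_const_R. lra.
Qed.

Lemma conv_periodic K f : periodic1 K -> periodic1 (conv K f).
Proof.
  intros Hp x. unfold conv. apply RInt_ext. intros y _.
  replace (x + 1 - y) with ((x - y) + 1) by ring. rewrite Hp. reflexivity.
Qed.

Lemma conv_minus_kernel K L f x : continuity K -> continuity L -> continuity f ->
  conv K f x - conv L f x = conv (fun y => K y - L y) f x.
Proof.
  intros HK HL Hf. unfold conv. rewrite <- RInt_minus_R by (apply ex_RInt_conv; auto).
  apply RInt_ext. intros; lra.
Qed.

Lemma conv_minus_density K f g x : continuity K -> continuity f -> continuity g ->
  conv K f x - conv K g x = conv K (fun y => f y - g y) x.
Proof.
  intros HK Hf Hg. unfold conv. rewrite <- RInt_minus_R by (apply ex_RInt_conv; auto).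
  apply RInt_ext. intros; lra.
Qed.

Lemma conv_C2 V V1 V2 K K1 K2 m H : C2T_with V V1 V2 -> C2T_with K K1 K2 -> continuity m ->
  C2T_with (fun x => conv K m x + H - V x)
           (fun x => conv K1 m x - V1 x) (fun x => conv K2 m x - V2 x).
Proof.
  intros HV HK Hmc.
  destruct (C2T_with_continuity _ _ _ HK) as [HKc HK1c].
  destruct HK as (HKp & HKd & HKd1 & HK2c).
  destruct HV as (HVp & HVd & HVd1 & HV2c).
  repeat split.
  - intro x. rewrite (conv_periodic K m HKp x), HVp. ring.
  - intro x. apply derivable_pt_lim_minus; [|apply HVd].
    rewrite <- Rplus_0_r. apply derivable_pt_lim_plus.
    + apply derivable_pt_lim_conv; auto.
    + apply derivable_pt_lim_const.
  - intro x. apply derivable_pt_lim_minus; [apply derivable_pt_lim_conv; auto | apply HVd1].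
  - apply continuity_minus; [apply continuity_conv|]; auto.
Qed.

Lemma Rpower_pos x y : 0 < Rpower x y.
Proof. apply exp_pos. Qed.

Lemma derivable_pt_lim_Rpower_comp F d c x : 0 < F x -> derivable_pt_lim F x d ->
  derivable_pt_lim (fun y => Rpower (F y) c) x (c * Rpower (F x) (c - 1) * d).
Proof.
  intros Hp Hd.
  apply (derivable_pt_lim_comp F (fun s => Rpower s c)); auto.
  apply derivable_pt_lim_power; auto.
Qed.

Lemma Rpower_le_sum w d M c : 0 < d -> d <= w <= M -> Rpower w c <= Rpower d c + Rpower M c.
Proof.
  intros Hd Hw. assert (H1 := Rpower_pos d c). assert (H2 := Rpower_pos M c).
  destruct (Rle_dec 0 c) as [Hc|Hc].
  - assert (Rpower w c <= Rpower M c) by (apply Rle_Rpower_l; auto; lra). lra.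
  - assert (Rpower w c <= Rpower d c); [|lra].
    replace c with (- - c) by ring. rewrite (Rpower_Ropp w), (Rpower_Ropp d).
    apply Rinv_le_contravar; [apply Rpower_pos | apply Rle_Rpower_l; lra].
Qed.

Lemma Rpower_lipschitz u v d M c : 0 < d -> d <= u <= M -> d <= v <= M ->
  Rabs (Rpower u c - Rpower v c) <= Rabs c * (Rpower d (c - 1) + Rpower M (c - 1)) * Rabs (u - v).
Proof.
  intros Hd Hu Hv.
  destruct (MVT_abs (fun s => Rpower s c) (fun s => c * Rpower s (c - 1)) v u) as [w [Hw Hwi]].
  { intros w Hw. apply derivable_pt_lim_power.
    assert (Rmin v u >= d) by (unfold Rmin; destruct Rle_dec; lra). lra. }
  rewrite Hw. apply Rmult_le_compat_r; [apply Rabs_pos|].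
  rewrite Rabs_mult. apply Rmult_le_compat_l; [apply Rabs_pos|].
  rewrite Rabs_right by (apply Rle_ge, Rlt_le, Rpower_pos). apply Rpower_le_sum; auto.
  unfold Rmin, Rmax in Hwi; destruct Rle_dec; lra.
Qed.

(** [phi A b] inverts [m |-> A / m ^ alpha] for [b = / alpha]; with [A = j ^ 2 / 2] problem (P)
    reads [m = phi A b (K * m + H - V)]. *)

Definition phi (A b s : R) := Rpower (A / s) b.

Section Phi.

Variables A b : R.
Hypothesis HA : 0 < A.
Hypothesis Hb : 0 < b.

Lemma phi_pos s : 0 < phi A b s.
Proof. apply Rpower_pos. Qed.

Lemma phi_eq s : 0 < s -> phi A b s = Rpower A b * Rpower s (- b).
Proof.
  intro Hs. unfold phi, Rpower. rewrite <- exp_plus. f_equal.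
  unfold Rdiv. rewrite ln_mult, ln_Rinv by (auto; apply Rinv_0_lt_compat; auto). ring.
Qed.

Lemma phi_derivable s : 0 < s -> derivable_pt_lim (phi A b) s (- b * phi A b s / s).
Proof.
  intro Hs.
  apply (derivable_pt_lim_locally_ext (fun s => Rpower A b * Rpower s (- b)) _ _ (s/2) (2*s)).
  - lra.
  - intros y Hy; symmetry; apply phi_eq; lra.
  - rewrite phi_eq by auto.
    replace (- b * (Rpower A b * Rpower s (- b)) / s) with (Rpower A b * (- b * Rpower s (- b - 1))).
    + apply derivable_pt_lim_scal, derivable_pt_lim_power; auto.
    + unfold Rminus. rewrite Rpower_plus, (Rpower_Ropp s 1), Rpower_1 by auto. field. lra.
Qed.

Lemma phi_decreasing u v : 0 < u <= v -> phi A b v <= phi A b u.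
Proof.
  intro H. unfold phi. apply Rle_Rpower_l; [lra|]. split.
  - apply Rdiv_lt_0_compat; lra.
  - apply Rmult_le_compat_l; [lra|]. apply Rinv_le_contravar; lra.
Qed.

Lemma phi_difference d M u v : 0 < d -> d <= u <= M -> d <= v <= M ->
  exists s, phi A b M / M <= s <= phi A b d / d /\ phi A b u - phi A b v = - b * s * (u - v).
Proof.
  intros Hd Hu Hv.
  assert (Hslope : forall c, d <= c <= M -> phi A b M / M <= phi A b c / c <= phi A b d / d).
  { intros c Hc. assert (phi A b M <= phi A b c) by (apply phi_decreasing; lra).
    assert (phi A b c <= phi A b d) by (apply phi_decreasing; lra).
    assert (0 < phi A b M) by apply phi_pos. assert (0 < phi A b c) by apply phi_pos.
    unfold Rdiv. split; apply Rmult_le_compat; try lra;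
      try (left; apply Rinv_0_lt_compat; lra); apply Rinv_le_contravar; lra. }
  assert (Hlt : forall u v, d <= u <= M -> d <= v <= M -> u < v ->
    exists s, phi A b M / M <= s <= phi A b d / d /\ phi A b u - phi A b v = - b * s * (u - v)).
  { clear u v Hu Hv. intros u v Hu Hv Huv.
    destruct (MVT_cor2 (phi A b) (fun s => - b * phi A b s / s) u v Huv) as [c [Hc Hci]].
    { intros c Hc. apply phi_derivable; lra. }
    exists (phi A b c / c). split; [apply Hslope; lra|].
    replace (phi A b u - phi A b v) with (- (phi A b v - phi A b u)) by ring.
    rewrite Hc. field. lra. }
  destruct (Rtotal_order u v) as [Huv|[<-|Huv]].
  - apply Hlt; auto.
  - exists (phi A b d / d). split; [apply Hslope; lra | ring].
  - destruct (Hlt v u Hv Hu Huv) as [s [Hs E]]. exists s. split; auto. lra.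
Qed.

Lemma phi_strongly_decreasing d M u v : 0 < d -> d <= u <= M -> d <= v <= M ->
  (phi A b u - phi A b v) * (u - v) <= - (b * phi A b M / M) * (u - v) ^ 2.
Proof.
  intros Hd Hu Hv. destruct (phi_difference d M u v Hd Hu Hv) as [s [Hs ->]].
  assert (0 <= (u - v) ^ 2) by apply pow2_ge_0.
  replace (- b * s * (u - v) * (u - v)) with (- (b * s) * (u - v) ^ 2) by ring.
  apply Rmult_le_compat_r; auto. unfold Rdiv. rewrite Rmult_assoc.
  apply Ropp_le_contravar, Rmult_le_compat_l; lra.
Qed.

Lemma phi_lipschitz d M u v : 0 < d -> d <= u <= M -> d <= v <= M ->
  Rabs (phi A b u - phi A b v) <= b * phi A b d / d * Rabs (u - v).
Proof.
  intros Hd Hu Hv. destruct (phi_difference d M u v Hd Hu Hv) as [s [Hs ->]].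
  assert (0 < phi A b M / M) by (apply Rdiv_lt_0_compat; [apply phi_pos|lra]).
  rewrite !Rabs_mult, Rabs_Ropp, !Rabs_right by lra.
  unfold Rdiv in *. apply Rmult_le_compat_r; [apply Rabs_pos|].
  rewrite Rmult_assoc. apply Rmult_le_compat_l; lra.
Qed.

Lemma phi_inverse m : 0 < m -> phi A b (A / Rpower m (/ b)) = m.
Proof.
  intro Hm. unfold phi. replace (A / (A / Rpower m (/ b))) with (Rpower m (/ b)).
  - rewrite Rpower_mult. replace (/ b * b) with 1 by (field; lra). apply Rpower_1; auto.
  - field. split; [apply Rgt_not_eq, Rpower_pos | lra].
Qed.

Lemma Rpower_phi s : 0 < s -> Rpower (phi A b s) (/ b) = A / s.
Proof.
  intro Hs. unfold phi. rewrite Rpower_mult. replace (b * / b) with 1 by (field; lra).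
  apply Rpower_1, Rdiv_lt_0_compat; auto.
Qed.

End Phi.

Lemma second_order_growth F F1 F2 K x0 : (forall x, derivable_pt_lim F x (F1 x)) ->
  (forall x, derivable_pt_lim F1 x (F2 x)) -> (forall x, Rabs (F2 x) <= K) ->
  F1 x0 = 0 -> forall x, F x <= F x0 + K * (x - x0) ^ 2.
Proof.
  intros HF HF1 HK H0 x.
  assert (B1 : forall y, Rabs (F1 y) <= K * Rabs (y - x0)).
  { intro y. destruct (MVT_abs F1 F2 x0 y) as [c [Hc _]]; [intros; apply HF1|].
    rewrite H0, Rminus_0_r in Hc. rewrite Hc. apply Rmult_le_compat_r; [apply Rabs_pos | apply HK]. }
  destruct (MVT_abs F F1 x0 x) as [c [Hc Hci]]; [intros; apply HF|].
  assert (Hcx : Rabs (c - x0) <= Rabs (x - x0)).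
  { unfold Rmin, Rmax in Hci. destruct Rle_dec;
    unfold Rabs; destruct Rcase_abs; destruct Rcase_abs; lra. }
  assert (HK0 : 0 <= K) by (apply Rle_trans with (Rabs (F2 x0)); [apply Rabs_pos | apply HK]).
  assert (Rabs (F x - F x0) <= K * (x - x0) ^ 2); [|apply Rabs_le_between in H; lra].
  rewrite Hc, <- pow2_abs.
  apply Rle_trans with (K * Rabs (c - x0) * Rabs (x - x0)).
  - apply Rmult_le_compat_r; [apply Rabs_pos | apply B1].
  - assert (0 <= Rabs (c - x0)) by apply Rabs_pos. assert (0 <= Rabs (x - x0)) by apply Rabs_pos.
    simpl. rewrite Rmult_1_r, Rmult_assoc. apply Rmult_le_compat_l; auto.
    apply Rmult_le_compat_r; auto.
Qed.

Lemma sqrt_plus_sqr_le mu K d : 0 <= mu -> 0 <= K -> 0 <= d ->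
  sqrt (mu + K * d ^ 2) <= sqrt mu + sqrt K * d.
Proof.
  intros Hmu HK Hd.
  assert (0 <= sqrt mu) by apply sqrt_pos. assert (0 <= sqrt K) by apply sqrt_pos.
  rewrite <- (sqrt_pow2 (sqrt mu + sqrt K * d)) by nra. apply sqrt_le_1_alt.
  replace ((sqrt mu + sqrt K * d) ^ 2) with
    (sqrt mu ^ 2 + sqrt K ^ 2 * d ^ 2 + 2 * sqrt mu * sqrt K * d) by ring.
  rewrite !pow2_sqrt by auto.
  assert (0 <= sqrt mu * sqrt K * d) by (apply Rmult_le_pos; [apply Rmult_le_pos|]; auto).
  lra.
Qed.

(** [F <= A] means [m ^ alpha >= 1], and then [m >= sqrt (m ^ alpha)] as [alpha <= 2]; this is the only
    use of [alpha <= 2]. *)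
Lemma sqrt_le_density A alpha m F : 0 < alpha <= 2 -> 0 < m -> 0 < F -> F <= A ->
  F = A / Rpower m alpha -> sqrt A / sqrt F <= m.
Proof.
  intros Hal Hm HF HFA E.
  assert (E1 : Rpower m alpha = A / F).
  { rewrite E. field. split; [apply Rgt_not_eq, Rpower_pos | lra]. }
  assert (E2 : m = Rpower (A / F) (/ alpha)).
  { rewrite <- E1, Rpower_mult. replace (alpha * / alpha) with 1 by (field; lra).
    rewrite Rpower_1; auto. }
  rewrite E2, <- sqrt_div_alt, <- Rpower_sqrt by (auto; apply Rdiv_lt_0_compat; lra).
  apply Rle_Rpower.
  - apply (Rmult_le_reg_r F); auto. unfold Rdiv. rewrite Rmult_assoc, Rinv_l by lra. lra.
  - apply Rinv_le_contravar; lra.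
Qed.

Lemma density_lower_near_min A alpha K F m x0 tau y : 0 < alpha <= 2 -> 0 <= K ->
  (forall x, 0 < F x) -> (forall x, 0 < m x) -> (forall x, F x = A / Rpower (m x) alpha) ->
  (forall x, F x <= F x0 + K * (x - x0) ^ 2) -> F x0 + K * tau ^ 2 <= A ->
  Rabs (y - x0) <= tau -> sqrt A / (sqrt (F x0) + sqrt K * Rabs (y - x0)) <= m y.
Proof.
  intros Hal HK HFp Hmp HFm Hgrowth HA Hy.
  assert (Hd : 0 <= Rabs (y - x0)) by apply Rabs_pos.
  assert (HFy : F y <= F x0 + K * Rabs (y - x0) ^ 2) by (rewrite pow2_abs; apply Hgrowth).
  assert (K * Rabs (y - x0) ^ 2 <= K * tau ^ 2)
    by (apply Rmult_le_compat_l; [lra | apply pow_incr; lra]).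
  apply Rle_trans with (sqrt A / sqrt (F y)); [|apply (sqrt_le_density A alpha); auto; lra].
  unfold Rdiv. apply Rmult_le_compat_l; [apply sqrt_pos|].
  apply Rinv_le_contravar; [apply sqrt_lt_R0; auto|].
  apply Rle_trans with (sqrt (F x0 + K * Rabs (y - x0) ^ 2)).
  - apply sqrt_le_1_alt; auto.
  - apply sqrt_plus_sqr_le; auto. left; auto.
Qed.

Lemma RInt_le_RInt01 (f : R -> R) a b : continuity f -> (forall x, 0 <= f x) ->
  0 <= a -> a <= b -> b <= 1 -> RInt f a b <= RInt f 0 1.
Proof.
  intros Hc Hp H0a Hab Hb1.
  rewrite <- (RInt_Chasles f 0 a 1), <- (RInt_Chasles f a b 1) by (apply ex_RInt_continuity; auto).
  assert (0 <= RInt f 0 a) by (apply RInt_ge_0; auto; apply ex_RInt_continuity; auto).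
  assert (0 <= RInt f b 1) by (apply RInt_ge_0; auto; apply ex_RInt_continuity; auto).
  change (RInt f a b <= RInt f 0 a + (RInt f a b + RInt f b 1)). lra.
Qed.

Lemma is_RInt_inv_linear c p q x0 tau : 0 < p -> 0 < q -> 0 <= tau ->
  is_RInt (fun x => c / (p + q * (x - x0))) x0 (x0 + tau) (c / q * (ln (p + q * tau) - ln p)).
Proof.
  intros Hp Hq Ht.
  replace (c / q * (ln (p + q * tau) - ln p)) with
    (minus (c / q * ln (p + q * (x0 + tau - x0))) (c / q * ln (p + q * (x0 - x0)))).
  2: { unfold minus, plus, opp; simpl. rewrite Rminus_diag, Rmult_0_r, Rplus_0_r.
       replace (x0 + tau - x0) with tau by ring. ring. }
  apply (@is_RInt_derive R_CompleteNormedModule (fun x => c / q * ln (p + q * (x - x0)))).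
  - intros x Hx. unfold Rmin, Rmax in Hx; destruct Rle_dec in Hx; try lra.
    apply is_derive_Reals.
    replace (c / (p + q * (x - x0))) with (c / q * (/ (p + q * (x - x0)) * (0 + q * (1 - 0))))
      by (field; nra).
    apply derivable_pt_lim_scal.
    apply (derivable_pt_lim_comp (fun x => p + q * (x - x0)) ln).
    + apply derivable_pt_lim_plus; [apply derivable_pt_lim_const|].
      apply derivable_pt_lim_scal, derivable_pt_lim_minus;
        [apply derivable_pt_lim_id | apply derivable_pt_lim_const].
    + apply derivable_pt_lim_ln. nra.
  - intros x Hx. unfold Rmin, Rmax in Hx; destruct Rle_dec in Hx; try lra.
    apply continuity_pt_filterlim, continuity_pt_div; [apply continuity_cst| |nra].
    apply continuity_pt_plus; [apply continuity_cst|].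
    apply continuity_pt_scal, continuity_pt_minus; [apply continuity_pt_id | apply continuity_cst].
Qed.

Lemma is_RInt_inv_linear_left c p q x0 tau : 0 < p -> 0 < q -> 0 <= tau ->
  is_RInt (fun x => c / (p + q * (x0 - x))) (x0 - tau) x0 (c / q * (ln (p + q * tau) - ln p)).
Proof.
  intros Hp Hq Ht.
  replace (c / q * (ln (p + q * tau) - ln p)) with
    (minus (- (c / q) * ln (p + q * (x0 - x0))) (- (c / q) * ln (p + q * (x0 - (x0 - tau))))).
  2: { unfold minus, plus, opp; simpl. rewrite Rminus_diag, Rmult_0_r, Rplus_0_r.
       replace (x0 - (x0 - tau)) with tau by ring. ring. }
  apply (@is_RInt_derive R_CompleteNormedModule (fun x => - (c / q) * ln (p + q * (x0 - x)))).
  - intros x Hx. unfold Rmin, Rmax in Hx; destruct Rle_dec in Hx; try lra.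
    apply is_derive_Reals.
    replace (c / (p + q * (x0 - x))) with (- (c / q) * (/ (p + q * (x0 - x)) * (0 + q * (0 - 1))))
      by (field; nra).
    apply derivable_pt_lim_scal.
    apply (derivable_pt_lim_comp (fun x => p + q * (x0 - x)) ln).
    + apply derivable_pt_lim_plus; [apply derivable_pt_lim_const|].
      apply derivable_pt_lim_scal, derivable_pt_lim_minus;
        [apply derivable_pt_lim_const | apply derivable_pt_lim_id].
    + apply derivable_pt_lim_ln. nra.
  - intros x Hx. unfold Rmin, Rmax in Hx; destruct Rle_dec in Hx; try lra.
    apply continuity_pt_filterlim, continuity_pt_div; [apply continuity_cst| |nra].
    apply continuity_pt_plus; [apply continuity_cst|].
    apply continuity_pt_scal, continuity_pt_minus; [apply continuity_cst | apply continuity_pt_id].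
Qed.

Lemma RInt_density_window m c p q x0 tau :
  0 < p -> 0 < q -> 0 <= tau <= 1/2 -> 0 <= x0 <= 1 ->
  continuity m -> (forall x, 0 <= m x) -> RInt m 0 1 = 1 ->
  (forall y, Rabs (y - x0) <= tau -> c / (p + q * Rabs (y - x0)) <= m y) ->
  c / q * (ln (p + q * tau) - ln p) <= 1.
Proof.
  intros Hp Hq Htau Hx0 Hmc Hmp Hm1 Hlow. rewrite <- Hm1.
  destruct (Rle_dec x0 (1/2)) as [Hl|Hl].
  - assert (HI := is_RInt_inv_linear c p q x0 tau Hp Hq ltac:(lra)).
    rewrite <- (is_RInt_unique _ _ _ _ HI).
    apply Rle_trans with (RInt m x0 (x0 + tau)); [|apply RInt_le_RInt01; auto; lra].
    apply RInt_le; [lra | eexists; exact HI | apply ex_RInt_continuity; auto|].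
    intros y Hy. rewrite <- (Rabs_right (y - x0)) by lra. apply Hlow.
    rewrite Rabs_right; lra.
  - assert (HI := is_RInt_inv_linear_left c p q x0 tau Hp Hq ltac:(lra)).
    rewrite <- (is_RInt_unique _ _ _ _ HI).
    apply Rle_trans with (RInt m (x0 - tau) x0); [|apply RInt_le_RInt01; auto; lra].
    apply RInt_le; [lra | eexists; exact HI | apply ex_RInt_continuity; auto|].
    intros y Hy. replace (x0 - y) with (Rabs (y - x0)) by (rewrite Rabs_left1 by lra; ring).
    apply Hlow. rewrite Rabs_left1; lra.
Qed.

Lemma exp_le_compat x y : x <= y -> exp x <= exp y.
Proof. intro H. destruct (Req_dec x y) as [->|]; [lra|]. left; apply exp_increasing; lra. Qed.

Lemma window_le_of_log_bound c p q tau : 0 < c -> 0 < p -> 0 < q -> 0 <= tau ->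
  c / q * (ln (p + q * tau) - ln p) <= 1 -> q * tau <= (exp (q / c) - 1) * p.
Proof.
  intros Hc Hp Hq Ht Hlog.
  assert (Hpq : 0 < p + q * tau) by nra.
  assert (Hr : ln ((p + q * tau) / p) <= q / c).
  { unfold Rdiv at 1. rewrite ln_mult, ln_Rinv by (try apply Rinv_0_lt_compat; lra).
    apply (Rmult_le_reg_l (c / q)); [apply Rdiv_lt_0_compat; auto|].
    replace (c / q * (q / c)) with 1 by (field; lra). lra. }
  apply exp_le_compat in Hr. rewrite exp_ln in Hr by (apply Rdiv_lt_0_compat; lra).
  apply (Rmult_le_compat_r p) in Hr; [|lra].
  replace ((p + q * tau) / p * p) with (p + q * tau) in Hr by (field; lra). lra.
Qed.

Definition window_radius A K := Rmin (1/2) (sqrt (Rmin 1 A / (2 * K))).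

Definition potential_lower_bound A K :=
  Rmin (Rmin 1 A / 2) (K * window_radius A K ^ 2 / (exp (sqrt K / sqrt A) - 1) ^ 2).

Lemma window_radius_spec A K : 0 < A -> 1 <= K ->
  0 < window_radius A K <= 1/2 /\ K * window_radius A K ^ 2 <= Rmin 1 A / 2.
Proof.
  intros HA HK. unfold window_radius. set (s0 := Rmin 1 A).
  assert (Hs0 : 0 < s0) by (unfold s0, Rmin; destruct Rle_dec; lra).
  assert (Hsq : 0 < sqrt (s0 / (2 * K))) by (apply sqrt_lt_R0, Rdiv_lt_0_compat; lra).
  assert (Htau : Rmin (1/2) (sqrt (s0 / (2 * K))) <= sqrt (s0 / (2 * K))) by apply Rmin_r.
  assert (Htau0 : 0 < Rmin (1/2) (sqrt (s0 / (2 * K)))) by (apply Rmin_pos; lra).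
  split; [split; [lra | apply Rmin_l]|].
  apply Rle_trans with (K * sqrt (s0 / (2 * K)) ^ 2).
  - apply Rmult_le_compat_l; [lra|]. apply pow_incr; lra.
  - rewrite pow2_sqrt by (apply Rlt_le, Rdiv_lt_0_compat; lra). right; field; lra.
Qed.

Lemma potential_lower_bound_pos A K : 0 < A -> 1 <= K -> 0 < potential_lower_bound A K.
Proof.
  intros HA HK. destruct (window_radius_spec A K HA HK) as [[Htau _] _].
  assert (HE : 1 < exp (sqrt K / sqrt A)).
  { rewrite <- exp_0. apply exp_increasing, Rdiv_lt_0_compat; apply sqrt_lt_R0; lra. }
  unfold potential_lower_bound. apply Rmin_pos.
  - unfold Rmin; destruct Rle_dec; lra.
  - apply Rdiv_lt_0_compat; [apply Rmult_lt_0_compat; [lra | apply pow_lt; auto]|].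
    apply pow_lt; lra.
Qed.

(** Near a minimum point [x0], [F] grows at most quadratically, so [m >= sqrt A / (sqrt (F x0) +
    sqrt K |y - x0|)] there; its integral over a window of fixed size diverges logarithmically as
    [F x0 -> 0], which unit mass forbids. *)
Lemma potential_lower A alpha K F F1 F2 m :
  0 < A -> 0 < alpha <= 2 -> 1 <= K ->
  periodic1 F -> (forall x, derivable_pt_lim F x (F1 x)) -> (forall x, derivable_pt_lim F1 x (F2 x)) ->
  (forall x, Rabs (F2 x) <= K) ->
  continuity m -> (forall x, 0 < m x) -> RInt m 0 1 = 1 ->
  (forall x, F x = A / Rpower (m x) alpha) ->
  forall x, potential_lower_bound A K <= F x.
Proof.
  intros HA Hal HK Hp HF HF1 HF2 Hmc Hmp Hm1 HFm.
  assert (HFp : forall x, 0 < F x).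
  { intro x; rewrite HFm. apply Rdiv_lt_0_compat; auto. apply Rpower_pos. }
  destruct (periodic1_min F Hp (derivable_continuity F F1 HF)) as [x0 [Hx0 Hmin]].
  intro x. apply Rle_trans with (F x0); [|apply Hmin].
  set (mu := F x0). assert (Hmu : 0 < mu) by apply HFp.
  unfold potential_lower_bound. set (s0 := Rmin 1 A).
  destruct (Rle_dec (s0 / 2) mu) as [Hbig|Hsmall]; [eapply Rle_trans; [apply Rmin_l | auto]|].
  apply Rnot_le_lt in Hsmall. eapply Rle_trans; [apply Rmin_r|].
  destruct (window_radius_spec A K HA HK) as [Htau HKtau].
  set (tau := window_radius A K) in *. fold s0 in HKtau.
  assert (Hgrowth := second_order_growth F F1 F2 K x0 HF HF1 HF2
    (min_derivative_0 F x0 (F1 x0) Hmin (HF x0))).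
  assert (Hlow : forall y, Rabs (y - x0) <= tau ->
    sqrt A / (sqrt mu + sqrt K * Rabs (y - x0)) <= m y).
  { intro y. apply (density_lower_near_min A alpha K F m); auto; try lra.
    assert (s0 <= A) by apply Rmin_r. fold mu. lra. }
  assert (Hq : 0 < sqrt K) by (apply sqrt_lt_R0; lra).
  assert (Hp0 : 0 < sqrt mu) by (apply sqrt_lt_R0; auto).
  assert (Hwin := window_le_of_log_bound (sqrt A) (sqrt mu) (sqrt K) tau
    ltac:(apply sqrt_lt_R0; auto) Hp0 Hq ltac:(lra)
    (RInt_density_window m (sqrt A) (sqrt mu) (sqrt K) x0 tau Hp0 Hq ltac:(lra) Hx0 Hmc
       ltac:(intro; left; auto) Hm1 Hlow)).
  set (E := exp (sqrt K / sqrt A)) in *.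
  assert (HE1 : 0 < E - 1) by (assert (0 < sqrt mu * (E - 1)) by nra; nra).
  assert (HK2 : K * tau ^ 2 <= (E - 1) ^ 2 * mu).
  { replace (K * tau ^ 2) with ((sqrt K * tau) ^ 2) by (rewrite Rpow_mult_distr, pow2_sqrt; lra).
    rewrite <- (pow2_sqrt mu) by lra.
    rewrite <- Rpow_mult_distr. apply pow_incr. nra. }
  apply (Rmult_le_reg_r ((E - 1) ^ 2)); [nra|].
  unfold Rdiv. rewrite Rmult_assoc, Rinv_l by nra. lra.
Qed.

Lemma potential_upper A alpha K m H V B BV :
  0 < A -> 0 < alpha -> continuity m -> continuity K -> (forall x, 0 < m x) -> RInt m 0 1 = 1 ->
  (forall x, conv K m x + H - V x = A / Rpower (m x) alpha) ->
  (forall y, Rabs (K y) <= B) -> (forall y, Rabs (V y) <= BV) ->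
  forall x, conv K m x + H - V x <= A + 2 * B + 2 * BV.
Proof.
  intros HA Hal Hmc HKc Hmp Hm1 Heq HB HBV x.
  assert (Hx1 : exists x1, 1 <= m x1).
  { apply Classical_Prop.NNPP. intro Hn.
    assert (Hlt : RInt m 0 1 < RInt (fun _ => 1) 0 1).
    { apply RInt_lt; try lra.
      - intros; apply continuity_pt_filterlim, continuity_cst.
      - intros; apply continuity_pt_filterlim; auto.
      - intros y _. apply Rnot_le_lt. intro. apply Hn. exists y; auto. }
    rewrite RInt_const_R, Hm1 in Hlt. lra. }
  destruct Hx1 as [x1 Hx1].
  assert (Hconv : forall y, Rabs (conv K m y) <= B).
  { intro y. rewrite <- (Rmult_1_r B), <- Hm1. apply conv_abs_le_mass; auto. intros; left; auto. }
  assert (HP : 1 <= Rpower (m x1) alpha).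
  { unfold Rpower. rewrite <- exp_0. apply exp_le_compat, Rmult_le_pos; [lra|].
    rewrite <- ln_1. apply ln_le; lra. }
  assert (HF1 : A / Rpower (m x1) alpha <= A).
  { unfold Rdiv. rewrite <- (Rmult_1_r A) at 2. apply Rmult_le_compat_l; [lra|].
    rewrite <- Rinv_1. apply Rinv_le_contravar; lra. }
  rewrite <- Heq in HF1.
  specialize (Hconv x) as h1. specialize (Hconv x1) as h2.
  specialize (HBV x) as h3. specialize (HBV x1) as h4.
  apply Rabs_le_between in h1, h2, h3, h4. lra.
Qed.

Lemma monotone_sqr_of_lipschitz D d k L : 0 < k -> 0 < L ->
  D * d <= - k * d ^ 2 -> Rabs D <= L * Rabs d -> D * d <= - (k / L ^ 2) * D ^ 2.
Proof.
  intros Hk HL Hmono Hlip.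
  assert (D ^ 2 <= L ^ 2 * d ^ 2).
  { rewrite <- (pow2_abs D), <- (pow2_abs d), <- Rpow_mult_distr.
    apply pow_incr. split; [apply Rabs_pos | auto]. }
  assert (k / L ^ 2 * D ^ 2 <= k * d ^ 2); [|lra].
  apply (Rmult_le_reg_l (L ^ 2)); [apply pow_lt; lra|].
  replace (L ^ 2 * (k / L ^ 2 * D ^ 2)) with (k * D ^ 2) by (field; lra).
  replace (L ^ 2 * (k * d ^ 2)) with (k * (L ^ 2 * d ^ 2)) by ring.
  apply Rmult_le_compat_l; lra.
Qed.

Lemma RInt_sqr_le_of_monotone G D d r c S P kappa :
  continuity G -> condM G -> continuity D -> periodic1 D -> continuity r ->
  RInt D 0 1 = 0 -> (forall x, d x = conv G D x + r x + c) ->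
  (forall x, Rabs (r x) <= S) -> (forall x, Rabs (D x) <= P) ->
  0 < kappa -> (forall x, D x * d x <= - kappa * D x ^ 2) ->
  RInt (fun x => D x ^ 2) 0 1 <= S * P / kappa.
Proof.
  intros HGc HM HDc HDp Hrc HD0 Hd Hr HP Hk Hmono.
  assert (HGD : continuity (conv G D)) by (apply continuity_conv; auto).
  assert (Hsplit : RInt (fun x => D x * d x) 0 1 =
    RInt (fun x => D x * conv G D x) 0 1 + RInt (fun x => D x * r x) 0 1 + c * RInt D 0 1).
  { rewrite (RInt_ext _ (fun x => (D x * conv G D x + D x * r x) + c * D x))
      by (intros; rewrite Hd; lra).
    rewrite RInt_plus_R, RInt_plus_R, RInt_scal_R; auto; try apply ex_RInt_continuity;
      repeat first [apply continuity_plus | apply continuity_mult | apply continuity_scal | apply continuity_cst]; auto. }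
  assert (Hpos : 0 <= RInt (fun x => D x * conv G D x) 0 1).
  { apply (HM D (conj HDp HDc) (conv G D)).
    - intro x. apply is_integral_of_RInt; auto. apply ex_RInt_conv; auto.
    - apply is_integral_of_RInt; auto. apply ex_RInt_continuity, continuity_mult; auto. }
  assert (Hr2 : - (S * P) <= RInt (fun x => D x * r x) 0 1).
  { assert (Habs : Rabs (RInt (fun x => D x * r x) 0 1) <= RInt (fun _ => P * S) 0 1).
    { apply RInt_abs_le; [lra | apply ex_RInt_continuity, continuity_mult; auto
        | apply ex_RInt_continuity, continuity_cst |].
      intros t _. rewrite Rabs_mult. apply Rmult_le_compat; auto; apply Rabs_pos. }
    rewrite RInt_const_R in Habs. apply Rabs_le_between in Habs. lra. }
  assert (Hup : RInt (fun x => D x * d x) 0 1 <= - kappa * RInt (fun x => D x ^ 2) 0 1).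
  { rewrite <- RInt_scal_R by (apply ex_RInt_continuity, continuity_sqr; auto).
    apply RInt_le; [lra| | |intros; apply Hmono].
    - apply (ex_RInt_ext (fun x => D x * conv G D x + D x * r x + c * D x)); [intros; rewrite Hd; lra|].
      apply ex_RInt_continuity.
      repeat first [apply continuity_plus | apply continuity_mult | apply continuity_scal | apply continuity_cst]; auto.
    - apply ex_RInt_continuity, continuity_scal, continuity_sqr; auto. }
  rewrite HD0, Rmult_0_r, Rplus_0_r in Hsplit.
  apply (Rmult_le_reg_l kappa); auto.
  replace (kappa * (S * P / kappa)) with (S * P) by (field; lra). lra.
Qed.

(** Young's inequality [|D| <= D ^ 2 / (2 eta) + eta / 2] turns the [L^2] bound into a sup bound. *)
Lemma conv_abs_le_RInt_sqr G D BG eta x : continuity G -> continuity D -> 0 <= BG -> 0 < eta ->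
  (forall y, Rabs (G y) <= BG) ->
  Rabs (conv G D x) <= BG * (RInt (fun y => D y ^ 2) 0 1 / (2 * eta) + eta / 2).
Proof.
  intros HGc HDc HBG Heta HGB.
  assert (HD2 : ex_RInt (fun y => D y ^ 2) 0 1) by (apply ex_RInt_continuity, continuity_sqr; auto).
  apply Rle_trans with (RInt (fun y => BG / (2 * eta) * D y ^ 2 + BG * eta / 2) 0 1).
  - unfold conv. apply RInt_abs_le; [lra | apply ex_RInt_conv; auto | |].
    + apply ex_RInt_continuity, continuity_plus;
        [apply continuity_scal, continuity_sqr; auto | apply continuity_cst].
    + intros t _. rewrite Rabs_mult.
      assert (Hyoung : Rabs (D t) <= D t ^ 2 / (2 * eta) + eta / 2).
      { assert (0 <= (Rabs (D t) - eta) ^ 2) by apply pow2_ge_0.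
        rewrite <- (pow2_abs (D t)). apply (Rmult_le_reg_l (2 * eta)); [lra|].
        replace (2 * eta * (Rabs (D t) ^ 2 / (2 * eta) + eta / 2))
          with (Rabs (D t) ^ 2 + eta ^ 2) by (field; lra). nra. }
      apply Rle_trans with (BG * Rabs (D t)).
      * apply Rmult_le_compat_r; [apply Rabs_pos | apply HGB].
      * replace (BG / (2 * eta) * D t ^ 2 + BG * eta / 2)
          with (BG * (D t ^ 2 / (2 * eta) + eta / 2)) by (field; lra).
        apply Rmult_le_compat_l; auto.
  - rewrite RInt_plus_R, RInt_scal_R, RInt_const_R by
      (auto; apply ex_RInt_continuity; first [apply continuity_cst | apply continuity_scal];
       apply continuity_sqr; auto).
    right. field. lra.
Qed.

Lemma mean_zero_offset_bound D d c rho : continuity D -> RInt D 0 1 = 0 ->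
  (exists k, 0 < k /\ forall x, D x * d x <= - k * d x ^ 2) ->
  (forall x, Rabs (d x - c) <= rho) -> Rabs c <= rho.
Proof.
  intros HDc HD0 [k [Hk Hmono]] Hd. apply Rnot_lt_le. intro Hc.
  assert (HcD : forall x, c * D x < 0).
  { intro x. specialize (Hd x). specialize (Hmono x). apply Rabs_le_between in Hd.
    assert (Hcd : 0 < c * d x) by (unfold Rabs in Hc; destruct Rcase_abs in Hc; nra).
    assert (0 < d x ^ 2) by (apply pow2_gt_0; intro E; rewrite E in Hcd; lra).
    assert (HDd : D x * d x < 0) by nra.
    assert (0 < (c * d x) * (- (D x * d x))) by nra. nra. }
  assert (Hlt : RInt (fun x => c * D x) 0 1 < RInt (fun _ => 0) 0 1).
  { apply RInt_lt; [lra | | | intros; apply HcD]; intros; apply continuity_pt_filterlim.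
    - apply continuity_cst.
    - apply continuity_scal; auto. }
  rewrite RInt_scal_R, HD0, RInt_const_R in Hlt by (apply ex_RInt_continuity; auto). lra.
Qed.

Lemma conv_perturbation_bound G K1 K2 m1 m2 e1 e2 x :
  continuity G -> continuity K1 -> continuity K2 -> continuity m1 -> continuity m2 ->
  (forall y, 0 <= m1 y) -> (forall y, 0 <= m2 y) -> RInt m1 0 1 = 1 -> RInt m2 0 1 = 1 ->
  (forall y, Rabs (K1 y - G y) <= e1) -> (forall y, Rabs (K2 y - G y) <= e2) ->
  Rabs (conv K1 m1 x - conv K2 m2 x - conv G (fun y => m1 y - m2 y) x) <= e1 + e2.
Proof.
  intros HGc HK1 HK2 Hm1 Hm2 Hp1 Hp2 Hi1 Hi2 He1 He2.
  rewrite <- conv_minus_density by auto.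
  replace (conv K1 m1 x - conv K2 m2 x - (conv G m1 x - conv G m2 x)) with
    ((conv K1 m1 x - conv G m1 x) - (conv K2 m2 x - conv G m2 x)) by ring.
  rewrite !conv_minus_kernel by auto.
  assert (a1 : Rabs (conv (fun y => K1 y - G y) m1 x) <= e1).
  { rewrite <- (Rmult_1_r e1), <- Hi1. apply conv_abs_le_mass; auto. apply continuity_minus; auto. }
  assert (a2 : Rabs (conv (fun y => K2 y - G y) m2 x) <= e2).
  { rewrite <- (Rmult_1_r e2), <- Hi2. apply conv_abs_le_mass; auto. apply continuity_minus; auto. }
  apply Rabs_le_between in a1, a2. apply Rabs_le. lra.
Qed.

Definition band_solution (A b : R) (V : R -> R) (dl M : R) (K m : R -> R) (H : R) : Prop :=
  continuity K /\ continuity m /\ periodic1 m /\ RInt m 0 1 = 1 /\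
  forall x, dl <= conv K m x + H - V x <= M /\ m x = phi A b (conv K m x + H - V x).

Section Stability.

Variables (A b BG dl M : R) (G V : R -> R).
Hypothesis HA : 0 < A.
Hypothesis Hb : 0 < b.
Hypothesis Hdl : 0 < dl.
Hypothesis HdM : dl <= M.
Hypothesis HBG : 0 <= BG.
Hypothesis HGc : continuity G.
Hypothesis HM : condM G.
Hypothesis HGB : forall y, Rabs (G y) <= BG.

Let L := b * phi A b dl / dl.
Let k := b * phi A b M / M.

Let L_pos : 0 < L.
Proof. apply Rdiv_lt_0_compat; auto. apply Rmult_lt_0_compat; auto. apply phi_pos. Qed.

Let k_pos : 0 < k.
Proof. apply Rdiv_lt_0_compat; [|lra]. apply Rmult_lt_0_compat; auto. apply phi_pos. Qed.

Lemma band_solution_pos K m H x : band_solution A b V dl M K m H -> 0 < m x.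
Proof. intros (_ & _ & _ & _ & Hs). rewrite (proj2 (Hs x)). apply phi_pos. Qed.

Lemma band_solutions_compare K1 m1 H1 K2 m2 H2 x :
  band_solution A b V dl M K1 m1 H1 -> band_solution A b V dl M K2 m2 H2 ->
  let d := (conv K1 m1 x + H1 - V x) - (conv K2 m2 x + H2 - V x) in
  (m1 x - m2 x) * d <= - k * d ^ 2 /\ Rabs (m1 x - m2 x) <= L * Rabs d /\ Rabs d <= M - dl.
Proof.
  intros (_ & _ & _ & _ & B1) (_ & _ & _ & _ & B2) d.
  destruct (B1 x) as [Hu1 E1]. destruct (B2 x) as [Hu2 E2]. rewrite E1, E2.
  split; [|split]; [apply (phi_strongly_decreasing A b HA Hb dl M)
                   | apply (phi_lipschitz A b HA Hb dl M) | unfold d; apply Rabs_le; lra]; auto.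
Qed.

Lemma stability_estimate K1 m1 H1 K2 m2 H2 e1 e2 eta :
  band_solution A b V dl M K1 m1 H1 -> band_solution A b V dl M K2 m2 H2 ->
  (forall y, Rabs (K1 y - G y) <= e1) -> (forall y, Rabs (K2 y - G y) <= e2) -> 0 < eta ->
  let rho := BG * ((e1 + e2) * (L * (M - dl)) / (k / L ^ 2) / (2 * eta) + eta / 2) + (e1 + e2) in
  Rabs (H1 - H2) <= rho /\ forall x, Rabs (m1 x - m2 x) <= L * (2 * rho).
Proof.
  intros Hs1 Hs2 He1 He2 Heta rho.
  assert (Hpt := fun x => band_solutions_compare K1 m1 H1 K2 m2 H2 x Hs1 Hs2).
  assert (Hp1 : forall x, 0 <= m1 x) by (intro; left; apply (band_solution_pos K1 m1 H1); auto).
  assert (Hp2 : forall x, 0 <= m2 x) by (intro; left; apply (band_solution_pos K2 m2 H2); auto).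
  destruct Hs1 as (HK1 & Hm1c & Hm1p & Hi1 & _). destruct Hs2 as (HK2 & Hm2c & Hm2p & Hi2 & _).
  set (D := fun x => m1 x - m2 x).
  set (d := fun x => (conv K1 m1 x + H1 - V x) - (conv K2 m2 x + H2 - V x)).
  set (r := fun x => conv K1 m1 x - conv K2 m2 x - conv G D x).
  assert (HL := L_pos). assert (Hk := k_pos).
  assert (HDc : continuity D) by (apply continuity_minus; auto).
  assert (HD0 : RInt D 0 1 = 0).
  { unfold D. rewrite RInt_minus_R, Hi1, Hi2 by (apply ex_RInt_continuity; auto). lra. }
  assert (Hr : forall x, Rabs (r x) <= e1 + e2)
    by (intro x; apply (conv_perturbation_bound G K1 K2 m1 m2 e1 e2 x); auto).
  assert (Henergy : RInt (fun x => D x ^ 2) 0 1 <= (e1 + e2) * (L * (M - dl)) / (k / L ^ 2)).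
  { apply (RInt_sqr_le_of_monotone G D d r (H1 - H2)); auto.
    - intro x. unfold D. rewrite Hm1p, Hm2p. reflexivity.
    - unfold r. apply continuity_minus; [apply continuity_minus|]; apply continuity_conv; auto.
    - intro x. unfold d, r. ring.
    - intro x. destruct (Hpt x) as (_ & P1 & P2). eapply Rle_trans; [apply P1|].
      apply Rmult_le_compat_l; lra.
    - apply Rdiv_lt_0_compat; [lra | apply pow_lt; lra].
    - intro x. destruct (Hpt x) as (P1 & P2 & _). apply monotone_sqr_of_lipschitz; auto. }
  assert (Hoff : forall x, Rabs (d x - (H1 - H2)) <= rho).
  { intro x. replace (d x - (H1 - H2)) with (conv G D x + r x) by (unfold d, r; ring).
    eapply Rle_trans; [apply Rabs_triang|]. unfold rho. apply Rplus_le_compat; [|apply Hr].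
    eapply Rle_trans; [apply (conv_abs_le_RInt_sqr G D BG eta); auto|].
    apply Rmult_le_compat_l; auto. apply Rplus_le_compat_r.
    unfold Rdiv. apply Rmult_le_compat_r; [left; apply Rinv_0_lt_compat; lra | auto]. }
  assert (HH : Rabs (H1 - H2) <= rho).
  { apply (mean_zero_offset_bound D d); auto. exists k. split; auto. intro x. apply Hpt. }
  split; auto. intro x. destruct (Hpt x) as (_ & P & _). eapply Rle_trans; [apply P|].
  apply Rmult_le_compat_l; [lra|]. change (Rabs (d x) <= 2 * rho). specialize (Hoff x).
  apply Rabs_le_between in Hoff, HH. apply Rabs_le. lra.
Qed.

Lemma stability eps : 0 < eps -> exists e, 0 < e /\
  forall K1 m1 H1 K2 m2 H2,
  band_solution A b V dl M K1 m1 H1 -> band_solution A b V dl M K2 m2 H2 ->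
  (forall y, Rabs (K1 y - G y) <= e) -> (forall y, Rabs (K2 y - G y) <= e) ->
  Rabs (H1 - H2) <= eps /\ forall x, Rabs (m1 x - m2 x) <= eps.
Proof.
  intros Heps. assert (HL := L_pos). assert (Hk := k_pos).
  set (T := eps / (2 * L + 1)). assert (HT : 0 < T) by (apply Rdiv_lt_0_compat; lra).
  set (eta := T / (BG + 1)). assert (Heta : 0 < eta) by (apply Rdiv_lt_0_compat; lra).
  set (Q := L * (M - dl) / (k / L ^ 2)).
  assert (HQ : 0 <= Q).
  { apply Rmult_le_pos; [apply Rmult_le_pos; lra|].
    left; apply Rinv_0_lt_compat, Rdiv_lt_0_compat; [lra | apply pow_lt; lra]. }
  assert (Hden : 0 < BG * Q / eta + 2)
    by (assert (0 <= BG * Q / eta) by (apply Rdiv_le_0_compat; nra); lra).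
  exists (T / (2 * (BG * Q / eta + 2))). split; [apply Rdiv_lt_0_compat; lra|].
  intros K1 m1 H1 K2 m2 H2 Hs1 Hs2 He1 He2.
  destruct (stability_estimate K1 m1 H1 K2 m2 H2 _ _ eta Hs1 Hs2 He1 He2 Heta) as [HH Hm].
  fold L k in HH, Hm.
  set (rho := BG * (_ / (2 * eta) + eta / 2) + _) in HH, Hm.
  assert (Hrho : rho <= T).
  { set (e := T / (2 * (BG * Q / eta + 2))) in rho.
    assert (E : rho = T / 2 + BG * eta / 2).
    { unfold rho. replace ((e + e) * (L * (M - dl)) / (k / L ^ 2)) with ((e + e) * Q)
        by (unfold Q, Rdiv; ring).
      unfold e. field. split; [lra|]. assert (0 <= BG * Q) by (apply Rmult_le_pos; auto). lra. }
    rewrite E. unfold eta.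
    assert (BG * (T / (BG + 1)) <= T); [|lra].
    apply (Rmult_le_reg_r (BG + 1)); [lra|].
    replace (BG * (T / (BG + 1)) * (BG + 1)) with (BG * T) by (field; lra). nra. }
  assert (HTeps : L * (2 * T) <= eps).
  { unfold T. apply (Rmult_le_reg_r (2 * L + 1)); [lra|].
    replace (L * (2 * (eps / (2 * L + 1))) * (2 * L + 1)) with (2 * L * eps) by (field; lra). nra. }
  assert (HTe : T <= eps).
  { unfold T. apply (Rmult_le_reg_r (2 * L + 1)); [lra|].
    replace (eps / (2 * L + 1) * (2 * L + 1)) with eps by (field; lra). nra. }
  assert (0 <= rho) by (eapply Rle_trans; [apply Rabs_pos | exact HH]).
  split; [lra|]. intro x. eapply Rle_trans; [apply Hm|]. nra.
Qed.

End Stability.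

Lemma Un_cv_ge_eventually u l N c : (forall k, (k >= N)%nat -> c <= u k) -> Un_cv u l -> c <= l.
Proof.
  intros Hb Hc. apply Rnot_lt_le. intro Hlt.
  destruct (Hc (c - l)) as [N1 HN1]; [lra|].
  specialize (HN1 (max N N1) ltac:(lia)). specialize (Hb (max N N1) ltac:(lia)).
  unfold R_dist in HN1. apply Rabs_def2 in HN1. lra.
Qed.

Lemma Un_cv_le_eventually u l N c : (forall k, (k >= N)%nat -> u k <= c) -> Un_cv u l -> l <= c.
Proof.
  intros Hb Hc. apply Ropp_le_cancel.
  apply (Un_cv_ge_eventually (fun k => - u k) _ N); [intros; apply Ropp_le_contravar; auto|].
  intros eps He. destruct (Hc eps He) as [N1 HN1]. exists N1. intros n Hn.
  unfold R_dist. rewrite <- Rabs_Ropp. replace (- (- u n - - l)) with (u n - l) by ring. apply HN1; auto.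
Qed.

Lemma Un_cv_dist_le_eventually a u l N eps :
  (forall k, (k >= N)%nat -> Rabs (a - u k) <= eps) -> Un_cv u l -> Rabs (a - l) <= eps.
Proof.
  intros Hb Hc. apply Rnot_lt_le. intro Hlt.
  destruct (Hc ((Rabs (a - l) - eps) / 2)) as [N1 HN1]; [lra|].
  specialize (HN1 (max N N1) ltac:(lia)). specialize (Hb (max N N1) ltac:(lia)).
  unfold R_dist in HN1.
  assert (Rabs (a - l) <= Rabs (a - u (max N N1)) + Rabs (u (max N N1) - l)); [|lra].
  replace (a - l) with ((a - u (max N N1)) + (u (max N N1) - l)) by ring. apply Rabs_triang.
Qed.

Lemma unif_cv_pointwise f F x : unif_cv f F -> Un_cv (fun n => f n x) (F x).
Proof.
  intros H eps He. destruct (H (eps/2) ltac:(lra)) as [N HN]. exists N. intros n Hn.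
  unfold R_dist. specialize (HN n x Hn). lra.
Qed.

Lemma unif_cv_of_cauchy f :
  (forall eps, 0 < eps -> exists N, forall n k x, (n >= N)%nat -> (k >= N)%nat -> Rabs (f n x - f k x) <= eps) ->
  exists F, unif_cv f F.
Proof.
  intros Hc.
  assert (Hcx : forall x, Cauchy_crit (fun n => f n x)).
  { intros x eps He. destruct (Hc (eps/2) ltac:(lra)) as [N HN]. exists N.
    intros n k Hn Hk. unfold R_dist. specialize (HN n k x Hn Hk). lra. }
  exists (fun x => proj1_sig (Rcomplete.R_complete _ (Hcx x))).
  intros eps He. destruct (Hc eps He) as [N HN]. exists N. intros n x Hn.
  apply (Un_cv_dist_le_eventually _ (fun k => f k x) _ N); [intros; apply HN; auto|].
  apply (proj2_sig (Rcomplete.R_complete _ (Hcx x))).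
Qed.

Lemma RInt_unif_cv f F : unif_cv f F -> (forall n, continuity (f n)) -> continuity F ->
  Un_cv (fun n => RInt (f n) 0 1) (RInt F 0 1).
Proof.
  intros Hf Hc HF eps He. destruct (Hf (eps / 2) ltac:(lra)) as [N HN]. exists N. intros n Hn.
  unfold R_dist. rewrite <- RInt_minus_R by (apply ex_RInt_continuity; auto).
  apply Rle_lt_trans with (RInt (fun _ => eps / 2) 0 1).
  - apply RInt_abs_le; [lra | | apply ex_RInt_continuity, continuity_cst | intros; apply HN; lia].
    apply ex_RInt_continuity, continuity_minus; auto.
  - rewrite RInt_const_R. lra.
Qed.

Lemma unif_cv_continuity f F : unif_cv f F -> (forall n, continuity (f n)) -> continuity F.
Proof.
  intros Hu Hc x eps He.
  destruct (Hu (eps/4) ltac:(lra)) as [N HN].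
  destruct (Hc N x (eps/4) ltac:(lra)) as [alp [Halp Hd]].
  exists alp. split; auto. intros y Hy. specialize (Hd y Hy).
  simpl in *. unfold R_dist in *.
  assert (H1 : Rabs (F y - f N y) <= eps/4) by (rewrite Rabs_minus_sym; apply HN; lia).
  assert (H2 : Rabs (f N x - F x) <= eps/4) by (apply HN; lia).
  apply Rabs_le_between in H1, H2. apply Rabs_def2 in Hd. apply Rabs_def1; lra.
Qed.

Lemma unif_cv_stationary F : unif_cv (fun _ => F) F.
Proof. intros eps He. exists 0%nat. intros. rewrite Rminus_diag, Rabs_R0. lra. Qed.

Lemma unif_cv_const h H : Un_cv h H -> unif_cv (fun n _ => h n) (fun _ => H).
Proof.
  intros Hc eps He. destruct (Hc eps He) as [N HN]. exists N. intros n x Hn.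
  left. apply HN; lia.
Qed.

Lemma unif_cv_plus f F g G : unif_cv f F -> unif_cv g G ->
  unif_cv (fun n x => f n x + g n x) (fun x => F x + G x).
Proof.
  intros Hf Hg eps He. destruct (Hf (eps/2) ltac:(lra)) as [N1 H1].
  destruct (Hg (eps/2) ltac:(lra)) as [N2 H2]. exists (max N1 N2). intros n x Hn.
  specialize (H1 n x ltac:(lia)). specialize (H2 n x ltac:(lia)).
  apply Rabs_le_between in H1, H2. apply Rabs_le. lra.
Qed.

Lemma unif_cv_scal c f F : unif_cv f F -> unif_cv (fun n x => c * f n x) (fun x => c * F x).
Proof.
  intros Hf eps He. assert (Hc := Rabs_pos c).
  destruct (Hf (eps / (Rabs c + 1))) as [N HN]; [apply Rdiv_lt_0_compat; lra|].
  exists N. intros n x Hn. rewrite <- Rmult_minus_distr_l, Rabs_mult.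
  specialize (HN n x Hn).
  apply Rle_trans with (Rabs c * (eps / (Rabs c + 1))); [apply Rmult_le_compat_l; auto|].
  apply (Rmult_le_reg_r (Rabs c + 1)); [lra|].
  replace (Rabs c * (eps / (Rabs c + 1)) * (Rabs c + 1)) with (Rabs c * eps) by (field; lra). nra.
Qed.

Lemma unif_cv_minus f F g G : unif_cv f F -> unif_cv g G ->
  unif_cv (fun n x => f n x - g n x) (fun x => F x - G x).
Proof.
  intros Hf Hg. apply (unif_cv_plus f F (fun n x => - g n x) (fun x => - G x)); auto.
  intros eps He. destruct (Hg eps He) as [N HN]. exists N. intros n x Hn.
  rewrite <- Rabs_Ropp. replace (- (- g n x - - G x)) with (g n x - G x) by ring. auto.
Qed.

Lemma unif_cv_mult f F g G CF CG : unif_cv f F -> unif_cv g G ->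
  (forall x, Rabs (F x) <= CF) -> (exists N, forall n x, (n >= N)%nat -> Rabs (g n x) <= CG) ->
  unif_cv (fun n x => f n x * g n x) (fun x => F x * G x).
Proof.
  intros Hf Hg HF [N0 Hg0] eps He.
  assert (HCF : 0 <= CF) by (eapply Rle_trans; [apply Rabs_pos | apply (HF 0)]).
  assert (HCG : 0 <= CG) by (eapply Rle_trans; [apply Rabs_pos | apply (Hg0 N0 0 (le_n _))]).
  set (e := eps / (CF + CG + 1)).
  assert (He' : 0 < e) by (apply Rdiv_lt_0_compat; lra).
  destruct (Hf e He') as [N1 H1]. destruct (Hg e He') as [N2 H2].
  exists (max N0 (max N1 N2)). intros n x Hn.
  specialize (H1 n x ltac:(lia)). specialize (H2 n x ltac:(lia)). specialize (Hg0 n x ltac:(lia)).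
  specialize (HF x).
  replace (f n x * g n x - F x * G x) with ((f n x - F x) * g n x + F x * (g n x - G x)) by ring.
  eapply Rle_trans; [apply Rabs_triang|]. rewrite !Rabs_mult.
  assert (Rabs (f n x - F x) * Rabs (g n x) <= e * CG) by (apply Rmult_le_compat; auto; apply Rabs_pos).
  assert (Rabs (F x) * Rabs (g n x - G x) <= CF * e) by (apply Rmult_le_compat; auto; apply Rabs_pos).
  assert (e * (CF + CG) <= eps); [|nra].
  unfold e. apply (Rmult_le_reg_r (CF + CG + 1)); [lra|].
  replace (eps / (CF + CG + 1) * (CF + CG) * (CF + CG + 1)) with (eps * (CF + CG)) by (field; lra). nra.
Qed.

Lemma unif_cv_Rpower f F c d M : unif_cv f F -> 0 < d -> (forall x, d <= F x <= M) ->
  (exists N, forall n x, (n >= N)%nat -> d <= f n x <= M) ->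
  unif_cv (fun n x => Rpower (f n x) c) (fun x => Rpower (F x) c).
Proof.
  intros Hf Hd HF [N0 H0] eps He.
  set (Lip := Rabs c * (Rpower d (c - 1) + Rpower M (c - 1))).
  assert (HL : 0 <= Lip).
  { apply Rmult_le_pos; [apply Rabs_pos|].
    assert (H1 := Rpower_pos d (c - 1)). assert (H2 := Rpower_pos M (c - 1)). lra. }
  destruct (Hf (eps / (Lip + 1))) as [N HN]; [apply Rdiv_lt_0_compat; lra|].
  exists (max N0 N). intros n x Hn.
  eapply Rle_trans; [apply (Rpower_lipschitz _ _ d M c); auto; apply H0; lia|].
  fold Lip. specialize (HN n x ltac:(lia)).
  apply Rle_trans with (Lip * (eps / (Lip + 1))); [apply Rmult_le_compat_l; auto|].
  apply (Rmult_le_reg_r (Lip + 1)); [lra|].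
  replace (Lip * (eps / (Lip + 1)) * (Lip + 1)) with (Lip * eps) by (field; lra). nra.
Qed.

Lemma unif_cv_conv Kn K mn m BK : unif_cv Kn K -> unif_cv mn m ->
  (forall n, continuity (Kn n)) -> (forall n, continuity (mn n)) -> continuity K -> continuity m ->
  (forall n, RInt (mn n) 0 1 = 1) -> (forall n x, 0 <= mn n x) -> (forall y, Rabs (K y) <= BK) ->
  unif_cv (fun n => conv (Kn n) (mn n)) (conv K m).
Proof.
  intros HK Hm HKc Hmc Kc mc Hi Hp HB eps He.
  assert (HB0 : 0 <= BK) by (eapply Rle_trans; [apply Rabs_pos | apply (HB 0)]).
  set (e := eps / (BK + 1)).
  assert (He' : 0 < e) by (apply Rdiv_lt_0_compat; lra).
  destruct (HK e He') as [N1 H1]. destruct (Hm e He') as [N2 H2].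
  exists (max N1 N2). intros n x Hn.
  replace (conv (Kn n) (mn n) x - conv K m x) with
    ((conv (Kn n) (mn n) x - conv K (mn n) x) + (conv K (mn n) x - conv K m x)) by ring.
  rewrite conv_minus_kernel, conv_minus_density by auto.
  assert (a1 : Rabs (conv (fun y => Kn n y - K y) (mn n) x) <= e * 1).
  { rewrite <- (Hi n). apply conv_abs_le_mass; auto; [apply continuity_minus; auto|].
    intro y. apply H1; lia. }
  assert (a2 : Rabs (conv K (fun y => mn n y - m y) x) <= BK * e).
  { apply conv_abs_le_sup; auto; [apply continuity_minus; auto|]. intro y; apply H2; lia. }
  assert ((BK + 1) * e <= eps) by (unfold e; right; field; lra).
  eapply Rle_trans; [apply Rabs_triang|]. lra.
Qed.

Definition phi_comp_d1 A b (F F1 : R -> R) x := Rpower A b * (- b * Rpower (F x) (- b - 1) * F1 x).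

Definition phi_comp_d2 A b (F F1 F2 : R -> R) x :=
  Rpower A b * (- b * ((- b - 1) * Rpower (F x) (- b - 1 - 1) * F1 x * F1 x
                       + Rpower (F x) (- b - 1) * F2 x)).

Lemma continuity_Rpower_comp F F1 c : (forall x, 0 < F x) -> (forall x, derivable_pt_lim F x (F1 x)) ->
  continuity (fun x => Rpower (F x) c).
Proof.
  intros Hp Hd. apply (derivable_continuity _ (fun x => c * Rpower (F x) (c - 1) * F1 x)).
  intro; apply derivable_pt_lim_Rpower_comp; auto.
Qed.

Lemma phi_comp_C2 A b F F1 F2 : 0 < A -> 0 < b -> C2T_with F F1 F2 -> (forall x, 0 < F x) ->
  C2T_with (fun x => phi A b (F x)) (phi_comp_d1 A b F F1) (phi_comp_d2 A b F F1 F2).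
Proof.
  intros HA Hb HF Hp.
  destruct (C2T_with_continuity _ _ _ HF) as [_ HF1c].
  destruct HF as (Hper & Hd & Hd1 & Hc2).
  assert (Hd' : forall c x, derivable_pt_lim (fun y => Rpower (F y) c) x (c * Rpower (F x) (c - 1) * F1 x))
    by (intros; apply derivable_pt_lim_Rpower_comp; auto).
  repeat split.
  - intro x. rewrite Hper. reflexivity.
  - intro x. apply (derivable_pt_lim_ext (fun x => Rpower A b * Rpower (F x) (- b))).
    + intros y. symmetry; apply phi_eq; auto.
    + apply derivable_pt_lim_scal, Hd'.
  - intro x. apply derivable_pt_lim_scal.
    apply (derivable_pt_lim_ext (fun x => - b * (Rpower (F x) (- b - 1) * F1 x))); [intros; ring|].
    replace (- b * ((- b - 1) * Rpower (F x) (- b - 1 - 1) * F1 x * F1 x + Rpower (F x) (- b - 1) * F2 x))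
      with (- b * (((- b - 1) * Rpower (F x) (- b - 1 - 1) * F1 x) * F1 x
                   + Rpower (F x) (- b - 1) * F2 x)) by ring.
    apply derivable_pt_lim_scal, (derivable_pt_lim_mult (fun x => Rpower (F x) (- b - 1)) F1); auto.
  - assert (Hrc : forall c, continuity (fun x => Rpower (F x) c))
      by (intro; apply (continuity_Rpower_comp F F1); auto).
    intro x. apply continuity_pt_scal, continuity_pt_scal, continuity_pt_plus.
    + apply continuity_pt_mult; [|apply HF1c].
      apply continuity_pt_mult; [|apply HF1c].
      apply continuity_pt_mult; [apply continuity_cst | apply Hrc].
    + apply continuity_pt_mult; [apply Hrc | apply Hc2].
Qed.

Lemma Rpower_band_bound (F : R -> R) c d M : 0 < d -> (forall x, d <= F x <= M) ->
  forall x, Rabs (Rpower (F x) c) <= Rpower d c + Rpower M c.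
Proof.
  intros Hd HF x. rewrite Rabs_right by (apply Rle_ge, Rlt_le, Rpower_pos).
  apply Rpower_le_sum; auto.
Qed.

Section PhiCompConvergence.

Variables (A b d M C : R) (Fn Fn1 Fn2 : nat -> R -> R) (F F1 F2 : R -> R).
Hypothesis Hd : 0 < d.
Hypothesis HFcv : unif_cv Fn F.
Hypothesis HF1cv : unif_cv Fn1 F1.
Hypothesis HF2cv : unif_cv Fn2 F2.
Hypothesis HF : forall x, d <= F x <= M.
Hypothesis HFn : exists N, forall n x, (n >= N)%nat -> d <= Fn n x <= M.
Hypothesis HF1 : forall x, Rabs (F1 x) <= C.
Hypothesis HFn12 : exists N, forall n x, (n >= N)%nat -> Rabs (Fn1 n x) <= C /\ Rabs (Fn2 n x) <= C.

Let HFn1 : exists N, forall n x, (n >= N)%nat -> Rabs (Fn1 n x) <= C.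
Proof. destruct HFn12 as [N HN]. exists N. intros; apply HN; auto. Qed.

Let HFn2 : exists N, forall n x, (n >= N)%nat -> Rabs (Fn2 n x) <= C.
Proof. destruct HFn12 as [N HN]. exists N. intros; apply HN; auto. Qed.

Let Hpow c : unif_cv (fun n x => Rpower (Fn n x) c) (fun x => Rpower (F x) c).
Proof. apply (unif_cv_Rpower Fn F c d M); auto. Qed.

Let Hscal_bound c e x : Rabs (c * Rpower (F x) e) <= Rabs c * (Rpower d e + Rpower M e).
Proof. rewrite Rabs_mult. apply Rmult_le_compat_l; [apply Rabs_pos | apply Rpower_band_bound; auto]. Qed.

Lemma unif_cv_phi_comp_d1 :
  unif_cv (fun n => phi_comp_d1 A b (Fn n) (Fn1 n)) (phi_comp_d1 A b F F1).
Proof.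
  apply (unif_cv_scal (Rpower A b) (fun n x => - b * Rpower (Fn n x) (- b - 1) * Fn1 n x)).
  eapply unif_cv_mult; [apply unif_cv_scal, Hpow | exact HF1cv | apply Hscal_bound | exact HFn1].
Qed.

Lemma unif_cv_phi_comp_d2 :
  unif_cv (fun n => phi_comp_d2 A b (Fn n) (Fn1 n) (Fn2 n)) (phi_comp_d2 A b F F1 F2).
Proof.
  apply (unif_cv_scal (Rpower A b)), (unif_cv_scal (- b)), unif_cv_plus.
  - eapply unif_cv_mult; [ | exact HF1cv | | exact HFn1].
    + eapply unif_cv_mult; [apply unif_cv_scal, Hpow | exact HF1cv | apply Hscal_bound | exact HFn1].
    + intro x. rewrite Rabs_mult.
      apply Rmult_le_compat; try apply Rabs_pos; [apply Hscal_bound | apply HF1].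
  - eapply unif_cv_mult; [apply Hpow | exact HF2cv | | exact HFn2].
    apply (Rpower_band_bound F _ d M Hd HF).
Qed.

End PhiCompConvergence.

Lemma C2T_with_bounded f f1 f2 : C2T_with f f1 f2 ->
  exists B, 0 <= B /\ forall x, Rabs (f x) <= B /\ Rabs (f1 x) <= B /\ Rabs (f2 x) <= B.
Proof.
  intros Hf. destruct (C2T_with_continuity _ _ _ Hf) as [Hc Hc1].
  destruct (C2T_with_periodic _ _ _ Hf) as [Hp1 Hp2]. destruct Hf as (Hp & _ & _ & Hc2).
  destruct (periodic1_bounded f Hp Hc) as [B0 [HB0 H0]].
  destruct (periodic1_bounded f1 Hp1 Hc1) as [B1 [HB1 H1]].
  destruct (periodic1_bounded f2 Hp2 Hc2) as [B2 [HB2 H2]].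
  exists (B0 + B1 + B2). split; [lra|]. intro x.
  specialize (H0 x). specialize (H1 x). specialize (H2 x). repeat split; lra.
Qed.

Lemma unif_cv_eventually_bounded f F B : unif_cv f F -> (forall x, Rabs (F x) <= B) ->
  exists N, forall n x, (n >= N)%nat -> Rabs (f n x) <= B + 1.
Proof.
  intros Hf HF. destruct (Hf 1 ltac:(lra)) as [N HN]. exists N. intros n x Hn.
  specialize (HN n x Hn). specialize (HF x).
  apply Rabs_le_between in HN, HF. apply Rabs_le. lra.
Qed.

Lemma conv_minus_abs_le K W m B BW x : continuity K -> continuity m -> (forall y, 0 <= m y) ->
  RInt m 0 1 = 1 -> (forall y, Rabs (K y) <= B) -> (forall y, Rabs (W y) <= BW) ->
  Rabs (conv K m x - W x) <= B + BW.
Proof.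
  intros HK Hm Hp Hm1 HB HW.
  assert (Hc : Rabs (conv K m x) <= B) by (rewrite <- (Rmult_1_r B), <- Hm1; apply conv_abs_le_mass; auto).
  specialize (HW x). apply Rabs_le_between in Hc, HW. apply Rabs_le. lra.
Qed.

Lemma solvesP_potential alpha j V K m H : solvesP alpha j V K m H ->
  continuity m /\ periodic1 m /\ (forall x, 0 < m x) /\ RInt m 0 1 = 1 /\
  forall x, conv K m x + H - V x = j ^ 2 / 2 / Rpower (m x) alpha.
Proof.
  intros [[Hmp Hmc] [Hpos [Hint Heq]]]. repeat split; auto.
  - apply RInt_of_is_integral; auto.
  - intro x. destruct (Heq x) as [c [Hc E]]. unfold conv. rewrite (RInt_of_is_integral _ _ _ _ Hc).
    assert (0 < Rpower (m x) alpha) by apply Rpower_pos.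
    replace c with (j ^ 2 / (2 * Rpower (m x) alpha) + V x - H) by lra. field. lra.
Qed.

Lemma solvesP_of_phi alpha j V K m H : 0 < alpha -> j <> 0 -> continuity K -> continuity m ->
  periodic1 m -> RInt m 0 1 = 1 -> (forall x, 0 < conv K m x + H - V x) ->
  (forall x, m x = phi (j ^ 2 / 2) (/ alpha) (conv K m x + H - V x)) -> solvesP alpha j V K m H.
Proof.
  intros Hal Hj HK Hmc Hmp Hm1 HF Hm.
  assert (HA : 0 < j ^ 2 / 2) by (assert (0 < j ^ 2) by (apply pow2_gt_0; auto); lra).
  repeat split; auto.
  - intro x. rewrite Hm. apply phi_pos.
  - apply is_integral_of_RInt; auto. apply ex_RInt_continuity; auto.
  - intro x. exists (conv K m x). split; [apply is_integral_of_RInt; auto; apply ex_RInt_conv; auto|].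
    assert (E : Rpower (m x) alpha = j ^ 2 / 2 / (conv K m x + H - V x)).
    { rewrite Hm, <- (Rpower_phi (j ^ 2 / 2) (/ alpha) HA (Rinv_0_lt_compat _ Hal) _ (HF x)).
      rewrite Rinv_inv. reflexivity. }
    rewrite E. specialize (HF x). field. split; lra.
Qed.

Section Convergence.

Variables (alpha j : R) (V V1 V2 G G1 G2 : R -> R) (Gn Gn1 Gn2 mn : nat -> R -> R) (Hn : nat -> R).
Hypothesis Hal : 0 < alpha.
Hypothesis Hal2 : alpha <= 2.
Hypothesis Hj : j <> 0.
Hypothesis HV : C2T_with V V1 V2.
Hypothesis HG : C2T_with G G1 G2.
Hypothesis HM : condM G.
Hypothesis HGn : forall n, C2T_with (Gn n) (Gn1 n) (Gn2 n).
Hypothesis HGcv : unif_cv Gn G.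
Hypothesis HG1cv : unif_cv Gn1 G1.
Hypothesis HG2cv : unif_cv Gn2 G2.
Hypothesis Hsol : forall n, solvesP alpha j V (Gn n) (mn n) (Hn n).

Let A := j ^ 2 / 2.
Let b := / alpha.
Let Fn n x := conv (Gn n) (mn n) x + Hn n - V x.
Let Fn1 n x := conv (Gn1 n) (mn n) x - V1 x.
Let Fn2 n x := conv (Gn2 n) (mn n) x - V2 x.

Let A_pos : 0 < A.
Proof. assert (0 < j ^ 2) by (apply pow2_gt_0; auto). unfold A; lra. Qed.

Let b_pos : 0 < b.
Proof. apply Rinv_0_lt_compat; auto. Qed.

Lemma mn_spec n : continuity (Gn n) /\ continuity (mn n) /\ periodic1 (mn n) /\
  (forall x, 0 < mn n x) /\ RInt (mn n) 0 1 = 1 /\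
  (forall x, Fn n x = A / Rpower (mn n x) alpha) /\ (forall x, mn n x = phi A b (Fn n x)) /\
  C2T_with (Fn n) (Fn1 n) (Fn2 n).
Proof.
  destruct (solvesP_potential _ _ _ _ _ _ (Hsol n)) as (Hc & Hp & Hpos & Hint & Heq).
  destruct (C2T_with_continuity _ _ _ (HGn n)) as [HGc _].
  do 6 (split; [assumption|]). split; [|apply conv_C2; auto].
  intro x. change (mn n x = phi A b (conv (Gn n) (mn n) x + Hn n - V x)).
  rewrite Heq. fold A. replace alpha with (/ b) by (apply Rinv_inv).
  symmetry. apply phi_inverse; auto.
Qed.

Lemma kernel_bounds : exists B N, 0 <= B /\
  (forall y, Rabs (G y) <= B /\ Rabs (G1 y) <= B /\ Rabs (G2 y) <= B) /\
  forall n y, (n >= N)%nat -> Rabs (Gn n y) <= B /\ Rabs (Gn1 n y) <= B /\ Rabs (Gn2 n y) <= B.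
Proof.
  destruct (C2T_with_bounded _ _ _ HG) as [BG [HBG HGb]].
  destruct (unif_cv_eventually_bounded Gn G BG HGcv) as [Na HNa]; [apply HGb|].
  destruct (unif_cv_eventually_bounded Gn1 G1 BG HG1cv) as [Nb HNb]; [apply HGb|].
  destruct (unif_cv_eventually_bounded Gn2 G2 BG HG2cv) as [Nc HNc]; [apply HGb|].
  exists (BG + 1), (max Na (max Nb Nc)). split; [lra|]. split.
  - intro y. destruct (HGb y) as (? & ? & ?). repeat split; lra.
  - intros n y Hn'. repeat split; [apply HNa | apply HNb | apply HNc]; lia.
Qed.

Lemma potential_band : exists dl M N, 0 < dl /\ dl <= M /\
  forall n x, (n >= N)%nat -> dl <= Fn n x <= M.
Proof.
  destruct kernel_bounds as [B [N [HB [_ HGnb]]]].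
  destruct (C2T_with_bounded _ _ _ HV) as [BV [HBV HVb]].
  set (K := B + BV + 1).
  assert (Hlow : forall n x, (n >= N)%nat -> potential_lower_bound A K <= Fn n x).
  { intros n x Hn'. destruct (mn_spec n) as (_ & Hc & _ & Hpos & Hint & Heq & _ & HC2).
    destruct HC2 as (Hp & Hd & Hd1 & _).
    apply (potential_lower A alpha K (Fn n) (Fn1 n) (Fn2 n) (mn n)); auto; try (unfold K; lra).
    intro y. eapply Rle_trans; [apply (conv_minus_abs_le _ _ _ B BV); auto|].
    - apply (HGn n).
    - intro; left; auto.
    - intro z. apply (HGnb n z Hn').
    - intro z. apply (HVb z).
    - unfold K; lra. }
  assert (Hup : forall n x, (n >= N)%nat -> Fn n x <= A + 2 * B + 2 * BV).
  { intros n x Hn'. destruct (mn_spec n) as (HGc & Hc & _ & Hpos & Hint & Heq & _).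
    apply (potential_upper A alpha (Gn n) (mn n) (Hn n) V B BV); auto.
    - intro z. apply (HGnb n z Hn').
    - intro z. apply (HVb z). }
  exists (potential_lower_bound A K), (A + 2 * B + 2 * BV), N.
  split; [apply potential_lower_bound_pos; auto; unfold K; lra|].
  split; [eapply Rle_trans; [apply (Hlow N 0) | apply (Hup N 0)]; lia|].
  intros n x Hn'. split; [apply Hlow | apply Hup]; auto.
Qed.

Lemma band_solution_mn dl M N : (forall n x, (n >= N)%nat -> dl <= Fn n x <= M) ->
  forall n, (n >= N)%nat -> band_solution A b V dl M (Gn n) (mn n) (Hn n).
Proof.
  intros Hband n Hn'. destruct (mn_spec n) as (HGc & Hc & Hp & _ & Hint & _ & Hphi & _).
  repeat split; auto; apply Hband; auto.
Qed.

Lemma solutions_cauchy eps : 0 < eps -> exists N, forall n k, (n >= N)%nat -> (k >= N)%nat ->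
  Rabs (Hn n - Hn k) <= eps /\ forall x, Rabs (mn n x - mn k x) <= eps.
Proof.
  intro Heps. destruct potential_band as [dl [M [N0 [Hdl [HdM Hband]]]]].
  destruct (C2T_with_bounded _ _ _ HG) as [BG [HBG HGb]].
  destruct (C2T_with_continuity _ _ _ HG) as [HGc _].
  destruct (stability A b BG dl M G V A_pos b_pos Hdl HdM HBG HGc HM (fun y => proj1 (HGb y))
    eps Heps) as [e [He Hstab]].
  destruct (HGcv e He) as [Ne HNe].
  exists (max N0 Ne). intros n k Hn' Hk.
  apply (Hstab (Gn n) (mn n) (Hn n) (Gn k) (mn k) (Hn k));
    try (apply (band_solution_mn dl M N0); auto; lia); intro y; apply HNe; lia.
Qed.

Lemma solutions_converge : exists m H, unif_cv mn m /\ Un_cv Hn H.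
Proof.
  destruct (unif_cv_of_cauchy mn) as [m Hm].
  { intros eps He. destruct (solutions_cauchy eps He) as [N HN]. exists N. intros; apply HN; auto. }
  assert (HcH : Cauchy_crit Hn).
  { intros eps He. destruct (solutions_cauchy (eps/2) ltac:(lra)) as [N HN]. exists N.
    intros n k Hn' Hk. unfold R_dist. destruct (HN n k Hn' Hk) as [HH _]. lra. }
  destruct (Rcomplete.R_complete Hn HcH) as [H HH]. exists m, H. auto.
Qed.

Section Limit.

Variables (m : R -> R) (H : R).
Hypothesis Hmcv : unif_cv mn m.
Hypothesis HHcv : Un_cv Hn H.

Let F x := conv G m x + H - V x.
Let F1 x := conv G1 m x - V1 x.
Let F2 x := conv G2 m x - V2 x.

Lemma limit_density : continuity m /\ periodic1 m /\ RInt m 0 1 = 1 /\ forall x, 0 <= m x.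
Proof.
  assert (Hmc : continuity m) by (apply (unif_cv_continuity mn); [exact Hmcv | intro n; apply mn_spec]).
  repeat split; auto.
  - intro x. apply (UL_sequence (fun n => mn n x)); [|apply unif_cv_pointwise; auto].
    intros eps He. destruct (unif_cv_pointwise mn m (x + 1) Hmcv eps He) as [N HN].
    exists N. intros n Hn'. destruct (mn_spec n) as (_ & _ & Hp & _). rewrite <- Hp. auto.
  - apply (UL_sequence (fun n => RInt (mn n) 0 1)).
    + apply RInt_unif_cv; auto. intro n; apply mn_spec.
    + intros eps He. exists 0%nat. intros n _. destruct (mn_spec n) as (_ & _ & _ & _ & -> & _).
      unfold R_dist. rewrite Rminus_diag, Rabs_R0. lra.
  - intro x. apply (Un_cv_ge_eventually (fun n => mn n x) _ 0); [|apply unif_cv_pointwise; auto].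
    intros n _. left. apply mn_spec.
Qed.

Lemma limit_potential_cv : unif_cv Fn F /\ unif_cv Fn1 F1 /\ unif_cv Fn2 F2.
Proof.
  destruct limit_density as (Hmc & _ & _ & _).
  destruct (C2T_with_bounded _ _ _ HG) as [BG [_ HGb]].
  destruct (C2T_with_continuity _ _ _ HG) as [HGc HG1c].
  assert (HG2c : continuity G2) by apply HG.
  assert (HGnc : forall n, continuity (Gn n)) by (intro n; apply (C2T_with_continuity _ _ _ (HGn n))).
  assert (HGn1c : forall n, continuity (Gn1 n)) by (intro n; apply (C2T_with_continuity _ _ _ (HGn n))).
  assert (HGn2c : forall n, continuity (Gn2 n)) by (intro n; apply (HGn n)).
  assert (Hmn : forall n, continuity (mn n)) by (intro n; apply mn_spec).
  assert (Hm1 : forall n, RInt (mn n) 0 1 = 1) by (intro n; apply mn_spec).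
  assert (Hmp : forall n x, 0 <= mn n x) by (intros n x; left; apply mn_spec).
  repeat split; apply unif_cv_minus; try apply unif_cv_stationary.
  - apply unif_cv_plus; [|apply unif_cv_const; auto].
    apply (unif_cv_conv Gn G mn m BG); auto. intro; apply HGb.
  - apply (unif_cv_conv Gn1 G1 mn m BG); auto. intro; apply HGb.
  - apply (unif_cv_conv Gn2 G2 mn m BG); auto. intro; apply HGb.
Qed.

Lemma limit_band : exists dl M N, 0 < dl /\ (forall x, dl <= F x <= M) /\
  forall n x, (n >= N)%nat -> dl <= Fn n x <= M.
Proof.
  destruct potential_band as [dl [M [N [Hdl [_ Hband]]]]].
  destruct limit_potential_cv as [HFcv _].
  exists dl, M, N. split; [auto|]. split; [|auto]. intro x. split.
  - apply (Un_cv_ge_eventually (fun n => Fn n x) _ N); [|apply unif_cv_pointwise; auto].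
    intros n Hn'. apply (Hband n x Hn').
  - apply (Un_cv_le_eventually (fun n => Fn n x) _ N); [|apply unif_cv_pointwise; auto].
    intros n Hn'. apply (Hband n x Hn').
Qed.

Lemma limit_phi x : m x = phi A b (F x).
Proof.
  destruct limit_band as [dl [M [N [Hdl [HF Hband]]]]].
  destruct limit_potential_cv as [HFcv _].
  apply (UL_sequence (fun n => mn n x)); [apply unif_cv_pointwise; auto|].
  set (L := b * phi A b dl / dl).
  assert (HL : 0 < L) by (apply Rdiv_lt_0_compat; auto; apply Rmult_lt_0_compat; auto; apply phi_pos).
  intros eps He. destruct (HFcv (eps / (L + 1))) as [N1 HN1]; [apply Rdiv_lt_0_compat; lra|].
  exists (max N N1). intros n Hn'. unfold R_dist. destruct (mn_spec n) as (_ & _ & _ & _ & _ & _ & -> & _).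
  eapply Rle_lt_trans; [apply (phi_lipschitz A b A_pos b_pos dl M); auto; apply Hband; lia|].
  fold L. specialize (HN1 n x ltac:(lia)).
  apply Rle_lt_trans with (L * (eps / (L + 1))); [apply Rmult_le_compat_l; lra|].
  apply (Rmult_lt_reg_r (L + 1)); [lra|].
  replace (L * (eps / (L + 1)) * (L + 1)) with (L * eps) by (field; lra). nra.
Qed.

Lemma limit_C2 : C2T m /\ C2_cv mn m.
Proof.
  destruct limit_band as [dl [M [N [Hdl [HF Hband]]]]].
  destruct limit_potential_cv as (HFcv & HF1cv & HF2cv).
  destruct limit_density as (Hmc & _ & Hm1 & Hmnn).
  destruct kernel_bounds as [B [Nk [HB [HGb HGnb]]]].
  destruct (C2T_with_bounded _ _ _ HV) as [BV [HBV HVb]].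
  destruct (C2T_with_continuity _ _ _ HG) as [_ HG1c].
  assert (HFpos : forall x, 0 < F x) by (intro x; specialize (HF x); lra).
  assert (HmC2 : C2T_with m (phi_comp_d1 A b F F1) (phi_comp_d2 A b F F1 F2)).
  { apply (C2T_with_ext (fun x => phi A b (F x))); [|exact limit_phi].
    apply phi_comp_C2; auto. exact (conv_C2 V V1 V2 G G1 G2 m H HV HG Hmc). }
  assert (HmnC2 : forall n, C2T_with (mn n) (phi_comp_d1 A b (Fn n) (Fn1 n))
                                     (phi_comp_d2 A b (Fn n) (Fn1 n) (Fn2 n))).
  { intro n. destruct (mn_spec n) as (_ & _ & _ & Hpos & _ & Heq & Hphi & HC2).
    apply (C2T_with_ext (fun x => phi A b (Fn n x))); [|exact Hphi].
    apply phi_comp_C2; auto. intro x. rewrite Heq. apply Rdiv_lt_0_compat; auto. apply Rpower_pos. }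
  assert (HF1b : forall x, Rabs (F1 x) <= B + BV).
  { intro x. change (Rabs (conv G1 m x - V1 x) <= B + BV).
    apply conv_minus_abs_le; auto; intro y; [apply HGb | apply HVb]. }
  assert (HFnb : exists N, forall n x, (n >= N)%nat ->
    Rabs (Fn1 n x) <= B + BV /\ Rabs (Fn2 n x) <= B + BV).
  { exists Nk. intros n x Hn'. destruct (mn_spec n) as (_ & Hc & _ & Hpos & Hint & _).
    destruct (C2T_with_continuity _ _ _ (HGn n)) as [_ HGn1c].
    assert (HGn2c : continuity (Gn2 n)) by apply (HGn n).
    assert (Hmp : forall y, 0 <= mn n y) by (intro; left; auto).
    split; [change (Rabs (conv (Gn1 n) (mn n) x - V1 x) <= B + BV)
           | change (Rabs (conv (Gn2 n) (mn n) x - V2 x) <= B + BV)];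
      apply conv_minus_abs_le; auto; intro y; first [apply (HGnb n y Hn') | apply HVb]. }
  split; [exists (phi_comp_d1 A b F F1), (phi_comp_d2 A b F F1 F2); exact HmC2|].
  exists (fun n => phi_comp_d1 A b (Fn n) (Fn1 n)), (fun n => phi_comp_d2 A b (Fn n) (Fn1 n) (Fn2 n)),
    (phi_comp_d1 A b F F1), (phi_comp_d2 A b F F1 F2).
  do 3 (split; [assumption|]). split.
  - exact (unif_cv_phi_comp_d1 A b dl M (B + BV) Fn Fn1 Fn2 F F1 Hdl HFcv HF1cv HF
             (ex_intro _ N Hband) HFnb).
  - exact (unif_cv_phi_comp_d2 A b dl M (B + BV) Fn Fn1 Fn2 F F1 F2 Hdl HFcv HF1cv HF2cv HF
             (ex_intro _ N Hband) HF1b HFnb).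
Qed.

End Limit.

Lemma convergence_to_solution : exists m H,
  C2T m /\ C2_cv mn m /\ Un_cv Hn H /\ solvesP alpha j V G m H.
Proof.
  destruct solutions_converge as [m [H [Hmcv HHcv]]].
  destruct (limit_density m Hmcv) as (Hmc & Hmp & Hm1 & _).
  destruct (limit_band m H Hmcv HHcv) as [dl [M [_ [Hdl [HF _]]]]].
  destruct (limit_C2 m H Hmcv HHcv) as [HmC2 Hcv].
  exists m, H. do 3 (split; [assumption|]).
  apply solvesP_of_phi; auto.
  - apply (C2T_with_continuity _ _ _ HG).
  - intro x. specialize (HF x). lra.
  - apply (limit_phi m H Hmcv HHcv).
Qed.

End Convergence.

Theorem mainTheorem11
  (alpha j : R) (V G : R -> R) (Gn : nat -> R -> R)
  (mn : nat -> R -> R) (Hn : nat -> R) :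
  0 < alpha -> alpha <= 2 -> j <> 0 ->
  C2T V -> C2T G -> condM G ->
  (forall n, C2T (Gn n)) ->
  C2_cv Gn G ->
  (forall n, solvesP alpha j V (Gn n) (mn n) (Hn n)) ->
  exists (m : R -> R) (Hbar : R),
    C2T m /\ C2_cv mn m /\ Un_cv Hn Hbar /\ solvesP alpha j V G m Hbar.
Proof.
  intros Hal Hal2 Hj [V1 [V2 HV]] _ HM _ [Gn1 [Gn2 [G1 [G2 [HGn [HG [Hcv [Hcv1 Hcv2]]]]]]]] Hsol.
  eapply convergence_to_solution; eauto.
Qed.
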